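(* Let $\omega\colon\mathbf Z_+\to(0,+\infty)$ be a weight which is bounded from below, such that $\omega(k2^n)\to+\infty$ as $n\to+\infty$ for every $k\ge3$, and such that $\mathcal T$ is a bounded operator on $\mathcal X_\omega$. Then $\mathcal T$ is hypercyclic on $\mathcal X_\omega$, i.e. there exists $f\in\mathcal X_\omega$ whose orbit $\{\mathcal T^nf;\ n\ge0\}$ is dense in $\mathcal X_\omega$. In particular, $\mathcal T$ is hypercyclic on $\mathcal X_{\omega_0}$, where $\omega_0(n)=(n+1)/\pi$.
   Context: $T\colon\mathbf Z_+\to\mathbf Z_+$ is the modified Collatz map: $T(n)=n/2$ for $n$ even, $T(n)=(3n+1)/2$ for $n$ odd. $\mathcal X_\omega$ is the Hilbert space of holomorphic functions $f(z)=\sum_{n\ge3}c_nz^n$ on the unit disk with $\|f\|_\omega^2=\sum_{n\ge3}|c_n|^2/\omega(n)<\infty$ (the quotient of the weighted Bergman space $\mathcal B^2_\omega$ by $\mathrm{span}[1,z,z^2]$). $\mathcal T\sum_{n\ge3}c_nz^n=\sum_{j\ge3,\,T(j)\ge3}c_jz^{T(j)}$. $\mathcal T$ is bounded on $\mathcal X_\omega$ iff the sequences $\omega(6m)/\omega(3m)$, $\omega(6m+2)/\omega(3m+1)$, $(\omega(6m+4)+\omega(2m+1))/\omega(3m+2)$ ($m\ge1$) are bounded; this holds for $\omega_0$. *)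

From Stdlib Require Import Reals List Arith.
From Coquelicot Require Import Coquelicot.
Open Scope R_scope.

Definition collatz (n : nat) : nat :=
  if Nat.even n then Nat.div2 n else Nat.div2 (3 * n + 1).

(* Elements of X_omega are represented by their Taylor coefficient sequences
   c : nat -> C with c n = 0 for n < 3 (f(z) = sum_{n>=3} c_n z^n). *)
Definition in_X (omega : nat -> R) (c : nat -> C) : Prop :=
  (forall n, (n < 3)%nat -> c n = 0%C) /\
  ex_series (fun n => (Cmod (c n)) ^ 2 / omega n).

Definition normX (omega : nat -> R) (c : nat -> C) : R :=
  sqrt (Series (fun n => (Cmod (c n)) ^ 2 / omega n)).

Definition Csub_seq (c d : nat -> C) : nat -> C := fun n => (c n - d n)%C.

(* The operator  T (sum c_n z^n) = sum_{j>=3, T(j)>=3} c_j z^{T(j)}.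
   The coefficient of z^m (m >= 3) is the sum of c_j over j >= 3 with
   collatz j = m; all such j satisfy j <= 2m, so the sum ranges over 3..2m. *)
Definition Top (c : nat -> C) : nat -> C :=
  fun m =>
    if (m <? 3)%nat then 0%C
    else fold_right Cplus 0%C
           (map c (filter (fun j => Nat.eqb (collatz j) m) (seq 3 (2 * m - 2)))).

Definition bounded_on_X (omega : nat -> R) : Prop :=
  exists M : R, forall c, in_X omega c ->
    in_X omega (Top c) /\ normX omega (Top c) <= M * normX omega c.

Definition hypercyclic_on_X (omega : nat -> R) : Prop :=
  exists f, in_X omega f /\
    forall g, in_X omega g -> forall eps : R, 0 < eps ->
      exists n : nat, normX omega (Csub_seq g (Nat.iter n Top f)) < eps.

Definition omega0 (n : nat) : R := (INR n + 1) / PI.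

From Stdlib Require Import Reals List Arith.
From Coquelicot Require Import Coquelicot.
From Stdlib Require Import Lia Lra FunctionalExtensionality ClassicalEpsilon Cantor ZArith ZifyNat.
Open Scope R_scope.

(* Write S for the right inverse of T given by S(sum c_n z^n) = sum c_n z^(2n).  Since
   omega(k 2^m) -> +oo, S^m y -> 0 for every polynomial y.  On the other side, z^j (j >= 3)
   is close to ker T^N for N large: either T^N z^j = 0, or T^N z^j = z^a with a prime to 3,
   and then z^a has at least L + 1 distinct preimages z^b under T^N, whose average v satisfies
   ||v||^2 <= 1 / ((L + 1) inf omega).  So the polynomials y with T^N y = 0 for some N are dense;
   take a dense sequence y_i of them, each term repeated infinitely often, T^(N_i) y_i = 0.
   For a fast increasing sequence n_i, f = sum_i S^(n_i) y_i satisfies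
   T^(n_k) f = y_k + T^(n_k) (sum_(i > k) S^(n_i) y_i), and the last term is small although
   ||T||^(n_k) may be large, because n_(k+1), n_(k+2), ... are chosen after n_k. *)

(* Sums over [i < n]; unlike Coquelicot's [sum_n] they may be empty. *)
Fixpoint rsum (n : nat) (f : nat -> R) : R :=
  match n with O => 0 | S n => rsum n f + f n end.
Fixpoint csum (n : nat) (f : nat -> C) : C :=
  match n with O => 0%C | S n => (csum n f + f n)%C end.

Lemma rsum_ext n f g : (forall i, (i < n)%nat -> f i = g i) -> rsum n f = rsum n g.
Proof.
  induction n as [|n IH]; intros H; simpl; [reflexivity|].
  rewrite IH by (intros; apply H; lia). now rewrite H by lia.
Qed.

Lemma rsum_le n f g : (forall i, (i < n)%nat -> f i <= g i) -> rsum n f <= rsum n g.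
Proof.
  induction n as [|n IH]; intros H; simpl; [lra|].
  apply Rplus_le_compat; [apply IH; intros; apply H|apply H]; lia.
Qed.

Lemma rsum_zero n f : (forall i, (i < n)%nat -> f i = 0) -> rsum n f = 0.
Proof.
  intros H. rewrite (rsum_ext n f (fun _ => 0)) by exact H.
  clear H; induction n; simpl; lra.
Qed.

Lemma rsum_nonneg n f : (forall i, (i < n)%nat -> 0 <= f i) -> 0 <= rsum n f.
Proof.
  intros H. apply Rle_trans with (rsum n (fun _ => 0)); [|now apply rsum_le].
  right; symmetry; now apply rsum_zero.
Qed.

Lemma rsum_plus n f g : rsum n (fun i => f i + g i) = rsum n f + rsum n g.
Proof. induction n; simpl; [lra|]. rewrite IHn; lra. Qed.

Lemma rsum_scal n c f : rsum n (fun i => c * f i) = c * rsum n f.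
Proof. induction n; simpl; [lra|]. rewrite IHn; lra. Qed.

Lemma rsum_const n c : rsum n (fun _ => c) = INR n * c.
Proof. induction n; simpl rsum; [simpl; lra|]. rewrite IHn, S_INR. lra. Qed.

Lemma rsum_shift n f : rsum (S n) f = f 0%nat + rsum n (fun i => f (S i)).
Proof. induction n; simpl in *; [lra|]. rewrite IHn. lra. Qed.

Lemma rsum_split n m f : rsum (n + m) f = rsum n f + rsum m (fun i => f (n + i)%nat).
Proof.
  induction m as [|m IH]; simpl; [rewrite Nat.add_0_r; lra|].
  rewrite Nat.add_succ_r. simpl. rewrite IH. lra.
Qed.

Lemma rsum_mono n m f : (n <= m)%nat -> (forall i, 0 <= f i) -> rsum n f <= rsum m f.
Proof. intros H Hf. induction H; [lra|]. simpl. specialize (Hf m). lra. Qed.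

Lemma rsum_cut n m f :
  (m <= n)%nat -> (forall i, (m <= i < n)%nat -> f i = 0) -> rsum n f = rsum m f.
Proof.
  intros H; induction H as [|n H IH]; intros Hf; [reflexivity|]. simpl.
  rewrite IH by (intros; apply Hf; lia). rewrite (Hf n) by lia. lra.
Qed.

Lemma rsum_swap n m F :
  rsum n (fun p => rsum m (fun i => F i p)) = rsum m (fun i => rsum n (fun p => F i p)).
Proof.
  induction n; simpl.
  - symmetry; now apply rsum_zero.
  - rewrite IHn, <- rsum_plus. reflexivity.
Qed.

Lemma rsum_indicator n b : rsum n (fun p => if Nat.eqb p b then 1 else 0) <= 1.
Proof.
  induction n; simpl; [lra|].
  destruct (Nat.eqb_spec n b); [|lra].
  rewrite rsum_zero; [lra|]. intros i Hi. destruct (Nat.eqb_spec i b); [lia|reflexivity].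
Qed.

Lemma rsum_even_odd n f :
  rsum (2 * n) f = rsum n (fun i => f (2 * i)%nat) + rsum n (fun i => f (2 * i + 1)%nat).
Proof.
  induction n; [simpl; lra|].
  replace (2 * S n)%nat with (S (S (2 * n))) by lia.
  change (rsum (S (S (2 * n))) f) with (rsum (2 * n) f + f (2 * n)%nat + f (S (2 * n))).
  rewrite IHn. cbn [rsum]. replace (S (2 * n)) with (2 * n + 1)%nat by lia. lra.
Qed.

Lemma rsum_mod3 n f :
  rsum (3 * n) f = rsum n (fun i => f (3 * i)%nat + f (3 * i + 1)%nat + f (3 * i + 2)%nat).
Proof.
  induction n; [simpl; lra|].
  replace (3 * S n)%nat with (S (S (S (3 * n)))) by lia.
  change (rsum (S (S (S (3 * n)))) f)
    with (rsum (3 * n) f + f (3 * n)%nat + f (S (3 * n)) + f (S (S (3 * n)))).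
  rewrite IHn. cbn [rsum].
  replace (S (3 * n)) with (3 * n + 1)%nat by lia.
  replace (S (3 * n + 1)) with (3 * n + 2)%nat by lia. lra.
Qed.

Lemma rsum_geom_half n : rsum n (fun i => (/ 2) ^ i) <= 2.
Proof.
  enough (H : rsum n (fun i => (/ 2) ^ i) <= 2 - 2 * (/ 2) ^ n).
  { pose proof (pow_le (/ 2) n ltac:(lra)). lra. }
  induction n; simpl; [lra|]. pose proof (pow_le (/ 2) n ltac:(lra)). lra.
Qed.

Lemma pow_le_antimono x i k : 0 <= x <= 1 -> (k <= i)%nat -> x ^ i <= x ^ k.
Proof.
  intros Hx H; induction H as [|i H IH]; [lra|]. simpl.
  pose proof (pow_le x i ltac:(lra)). nra.
Qed.

Lemma sum_n_rsum a n : sum_n a n = rsum (S n) a.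
Proof.
  induction n; simpl.
  - rewrite sum_O. simpl; lra.
  - rewrite sum_Sn, IHn. reflexivity.
Qed.

Lemma csum_ext n (f g : nat -> C) : (forall i, (i < n)%nat -> f i = g i) -> csum n f = csum n g.
Proof.
  induction n as [|n IH]; intros H; simpl; [reflexivity|].
  rewrite IH by (intros; apply H; lia). now rewrite H by lia.
Qed.

Lemma csum_zero n (f : nat -> C) : (forall i, (i < n)%nat -> f i = 0%C) -> csum n f = 0%C.
Proof.
  intros H. rewrite (csum_ext n f (fun _ => 0%C)) by exact H.
  clear H; induction n; simpl; [reflexivity|]. rewrite IHn. ring.
Qed.

Lemma csum_plus n (f g : nat -> C) : csum n (fun i => f i + g i)%C = (csum n f + csum n g)%C.
Proof. induction n; simpl; [ring|]. rewrite IHn; ring. Qed.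

Lemma csum_scal n (c : C) (f : nat -> C) : csum n (fun i => c * f i)%C = (c * csum n f)%C.
Proof. induction n; simpl; [ring|]. rewrite IHn; ring. Qed.

Lemma csum_const n (c : C) : csum n (fun _ => c) = (RtoC (INR n) * c)%C.
Proof. induction n; simpl csum; [simpl; ring|]. rewrite IHn, S_INR, RtoC_plus. ring. Qed.

Lemma csum_shift n (f : nat -> C) : csum (S n) f = (f 0%nat + csum n (fun i => f (S i)))%C.
Proof. induction n; simpl in *; [ring|]. rewrite IHn. ring. Qed.

Lemma csum_cut n m (f : nat -> C) :
  (m <= n)%nat -> (forall i, (m <= i < n)%nat -> f i = 0%C) -> csum n f = csum m f.
Proof.
  intros H; induction H as [|n H IH]; intros Hf; [reflexivity|]. simpl.
  rewrite IH by (intros; apply Hf; lia). rewrite (Hf n) by lia. ring.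
Qed.

Lemma csum_single n b (c : C) :
  csum n (fun p => if Nat.eqb p b then c else 0%C) = if Nat.ltb b n then c else 0%C.
Proof.
  induction n; simpl; [destruct b; reflexivity|]. rewrite IHn.
  destruct (Nat.eqb_spec n b), (Nat.ltb_spec b n), (Nat.ltb_spec b (S n)); try lia; ring.
Qed.

Lemma csum_RtoC n f : csum n (fun i => RtoC (f i)) = RtoC (rsum n f).
Proof. induction n; simpl; [reflexivity|]. now rewrite IHn, RtoC_plus. Qed.

Lemma Cmod_sqr_add_le (a b : C) : Cmod (a + b) ^ 2 <= 2 * Cmod a ^ 2 + 2 * Cmod b ^ 2.
Proof.
  pose proof (Cmod_triangle a b). pose proof (Cmod_ge_0 (a + b)).
  pose proof (Cmod_ge_0 a). pose proof (Cmod_ge_0 b).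
  assert (Cmod (a + b) ^ 2 <= (Cmod a + Cmod b) ^ 2) by (apply pow_incr; lra).
  pose proof (pow2_ge_0 (Cmod a - Cmod b)). nra.
Qed.

Lemma Cmod_sqr_sub_le (a b : C) : Cmod (a - b) ^ 2 <= 2 * Cmod a ^ 2 + 2 * Cmod b ^ 2.
Proof. pose proof (Cmod_sqr_add_le a (- b)). now rewrite Cmod_opp in H. Qed.

(* Weighted Cauchy-Schwarz, with weights 2^-(i+1) summing to less than 1. *)
Lemma Cmod_sqr_csum_le n z : Cmod (csum n z) ^ 2 <= rsum n (fun i => 2 ^ S i * Cmod (z i) ^ 2).
Proof.
  revert z; induction n; intros z.
  - simpl. rewrite Cmod_0. lra.
  - rewrite csum_shift, rsum_shift.
    eapply Rle_trans; [apply Cmod_sqr_add_le|].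
    specialize (IHn (fun i => z (S i))). cbv beta in IHn.
    replace (rsum n (fun i => 2 ^ S (S i) * Cmod (z (S i)) ^ 2))
      with (2 * rsum n (fun i => 2 ^ S i * Cmod (z (S i)) ^ 2))
      by (rewrite <- rsum_scal; apply rsum_ext; intros; simpl; lra).
    simpl pow at 2. lra.
Qed.

Lemma ex_series_bounded_partial (a : nat -> R) B :
  (forall n, 0 <= a n) -> (forall n, rsum n a <= B) -> ex_series a /\ Series a <= B.
Proof.
  intros Ha HB.
  assert (Hl : ex_finite_lim_seq (sum_n a)).
  { apply ex_finite_lim_seq_incr with B; intros n; rewrite !sum_n_rsum; [|apply HB].
    simpl. specialize (Ha (S n)). lra. }
  destruct Hl as [l Hl]. split; [now exists l|].
  unfold Series. rewrite (is_lim_seq_unique _ _ Hl). simpl.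
  apply (is_lim_seq_le (sum_n a) (fun _ => B) l B).
  - intros; rewrite sum_n_rsum; apply HB.
  - exact Hl.
  - apply is_lim_seq_const.
Qed.

Lemma rsum_le_Series (a : nat -> R) : (forall n, 0 <= a n) -> ex_series a ->
  forall n, rsum n a <= Series a.
Proof.
  intros Ha Hex n.
  apply (is_lim_seq_le_loc (fun _ => rsum n a) (sum_n a) (rsum n a) (Series a));
    [|apply is_lim_seq_const|apply Series_correct, Hex].
  exists n. intros m Hm. rewrite sum_n_rsum. apply rsum_mono; auto; lia.
Qed.

Definition zero_below3 (x : nat -> C) : Prop := forall n, (n < 3)%nat -> x n = 0%C.
Definition finitely_supported (x : nat -> C) : Prop :=
  exists Q, forall p, (Q <= p)%nat -> x p = 0%C.

Definition vzero : nat -> C := fun _ => 0%C.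
Definition vadd (x y : nat -> C) : nat -> C := fun p => (x p + y p)%C.
Definition vscal (k : C) (x : nat -> C) : nat -> C := fun p => (k * x p)%C.
Definition vsum (n : nat) (X : nat -> nat -> C) : nat -> C := fun p => csum n (fun i => X i p).
Definition basis (b : nat) : nat -> C := fun p => if Nat.eqb p b then 1%C else 0%C.

Lemma zero_below3_vzero : zero_below3 vzero.
Proof. now intros p _. Qed.

Lemma zero_below3_sub x y : zero_below3 x -> zero_below3 y -> zero_below3 (Csub_seq x y).
Proof. intros Hx Hy n Hn. unfold Csub_seq. rewrite Hx, Hy by auto. ring. Qed.

Lemma zero_below3_vscal c x : zero_below3 x -> zero_below3 (vscal c x).
Proof. intros H p Hp. unfold vscal. rewrite H by auto. ring. Qed.

Lemma zero_below3_vsum n X : (forall i, (i < n)%nat -> zero_below3 (X i)) -> zero_below3 (vsum n X).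
Proof. intros H p Hp. apply csum_zero. intros i Hi. now apply H. Qed.

Lemma zero_below3_basis b : (3 <= b)%nat -> zero_below3 (basis b).
Proof. intros Hb n Hn. unfold basis. destruct (Nat.eqb_spec n b); [lia|reflexivity]. Qed.

Lemma finitely_supported_vsum n X :
  (forall i, (i < n)%nat -> finitely_supported (X i)) -> finitely_supported (vsum n X).
Proof.
  induction n as [|n IH]; intros H; [now exists 0%nat|].
  destruct IH as [Q1 HQ1]; [intros; apply H; lia|]. destruct (H n) as [Q2 HQ2]; [lia|].
  exists (Nat.max Q1 Q2). intros p Hp. unfold vsum; simpl.
  unfold vsum in HQ1. rewrite HQ1, HQ2 by lia. ring.
Qed.

Section WeightedNorm.

Variable om : nat -> R.
Hypothesis om_pos : forall n, (1 <= n)%nat -> 0 < om n.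

Definition wterm (x : nat -> C) (p : nat) : R := Cmod (x p) ^ 2 / om p.
Definition sqnorm (x : nat -> C) : R := Series (wterm x).

Lemma normX_sqnorm x : normX om x = sqrt (sqnorm x).
Proof. reflexivity. Qed.

Lemma wterm_below3 x p : zero_below3 x -> (p < 3)%nat -> wterm x p = 0.
Proof. intros Hx Hp. unfold wterm. rewrite Hx, Cmod_0 by exact Hp. unfold Rdiv; ring. Qed.

Lemma wterm_nonneg x p : zero_below3 x -> 0 <= wterm x p.
Proof.
  intros Hx. destruct (Nat.lt_ge_cases p 3).
  - rewrite wterm_below3 by auto. lra.
  - apply Rdiv_le_0_compat; [apply pow2_ge_0|apply om_pos; lia].
Qed.

Lemma in_X_of_partial_le x B : zero_below3 x -> (forall n, rsum n (wterm x) <= B) ->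
  in_X om x /\ sqnorm x <= B.
Proof.
  intros Hx HB. destruct (ex_series_bounded_partial (wterm x) B) as [E S]; auto.
  - intros; now apply wterm_nonneg.
  - repeat split; auto.
Qed.

Lemma rsum_le_sqnorm x : in_X om x -> forall n, rsum n (wterm x) <= sqnorm x.
Proof. intros [Hx E] n. apply rsum_le_Series; auto. intros; now apply wterm_nonneg. Qed.

Lemma sqnorm_nonneg x : in_X om x -> 0 <= sqnorm x.
Proof.
  intros Hx. apply Rle_trans with (rsum 0 (wterm x)); [simpl; lra|]. now apply rsum_le_sqnorm.
Qed.

Lemma in_X_vzero : in_X om vzero /\ sqnorm vzero <= 0.
Proof.
  apply in_X_of_partial_le; [apply zero_below3_vzero|]. intros n.
  rewrite rsum_zero; [lra|]. intros. unfold wterm, vzero. rewrite Cmod_0. unfold Rdiv; ring.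
Qed.

Lemma sqnorm_le_comb x y z c1 c2 : zero_below3 x -> in_X om y -> in_X om z -> 0 <= c1 -> 0 <= c2 ->
  (forall p, (3 <= p)%nat -> Cmod (x p) ^ 2 <= c1 * Cmod (y p) ^ 2 + c2 * Cmod (z p) ^ 2) ->
  in_X om x /\ sqnorm x <= c1 * sqnorm y + c2 * sqnorm z.
Proof.
  intros Hx Hy Hz H1 H2 H. pose proof (proj1 Hy) as Zy. pose proof (proj1 Hz) as Zz.
  apply in_X_of_partial_le; auto. intros n.
  apply Rle_trans with (rsum n (fun p => c1 * wterm y p + c2 * wterm z p)).
  - apply rsum_le. intros p _. destruct (Nat.lt_ge_cases p 3).
    + rewrite !wterm_below3 by assumption. lra.
    + unfold wterm, Rdiv. specialize (H p H0). pose proof (om_pos p ltac:(lia)).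
      apply Rmult_le_compat_r with (r := / om p) in H; [lra|].
      left; now apply Rinv_0_lt_compat.
  - rewrite rsum_plus, !rsum_scal.
    pose proof (rsum_le_sqnorm y Hy n). pose proof (rsum_le_sqnorm z Hz n). nra.
Qed.

Lemma sqnorm_sub_le x y : in_X om x -> in_X om y ->
  in_X om (Csub_seq x y) /\ sqnorm (Csub_seq x y) <= 2 * sqnorm x + 2 * sqnorm y.
Proof.
  intros Hx Hy. apply sqnorm_le_comb; try lra; auto.
  - exact (zero_below3_sub x y (proj1 Hx) (proj1 Hy)).
  - intros p _. apply Cmod_sqr_sub_le.
Qed.

Lemma sqnorm_add_le x y : in_X om x -> in_X om y ->
  in_X om (vadd x y) /\ sqnorm (vadd x y) <= 2 * sqnorm x + 2 * sqnorm y.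
Proof.
  intros Hx Hy. apply sqnorm_le_comb; try lra; auto.
  - intros n Hn. unfold vadd. rewrite (proj1 Hx), (proj1 Hy) by auto. ring.
  - intros p _. apply Cmod_sqr_add_le.
Qed.

Lemma sqnorm_vscal_le c x : in_X om x ->
  in_X om (vscal c x) /\ sqnorm (vscal c x) <= Cmod c ^ 2 * sqnorm x.
Proof.
  intros Hx. destruct (sqnorm_le_comb (vscal c x) x x (Cmod c ^ 2) 0) as [H1 H2]; auto.
  - exact (zero_below3_vscal c x (proj1 Hx)).
  - apply pow2_ge_0.
  - lra.
  - intros p _. unfold vscal. rewrite Cmod_mult, Rpow_mult_distr. lra.
  - split; auto. lra.
Qed.

Lemma sqnorm_vsum_le n X : (forall i, (i < n)%nat -> in_X om (X i)) ->
  in_X om (vsum n X) /\ sqnorm (vsum n X) <= rsum n (fun i => 2 ^ S i * sqnorm (X i)).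
Proof.
  intros HX. apply in_X_of_partial_le; [apply zero_below3_vsum; intros; exact (proj1 (HX i H))|].
  intros m.
  apply Rle_trans with (rsum m (fun p => rsum n (fun i => 2 ^ S i * wterm (X i) p))).
  - apply rsum_le. intros p _. destruct (Nat.lt_ge_cases p 3).
    + rewrite wterm_below3 by (auto; apply zero_below3_vsum; intros; exact (proj1 (HX i H0))).
      apply rsum_nonneg. intros i Hi. rewrite wterm_below3 by (auto; exact (proj1 (HX i Hi))). lra.
    + unfold wterm, Rdiv.
      rewrite (rsum_ext n _ (fun i => / om p * (2 ^ S i * Cmod (X i p) ^ 2))) by (intros; ring).
      rewrite rsum_scal, Rmult_comm. apply Rmult_le_compat_l.
      * left; apply Rinv_0_lt_compat, om_pos; lia.
      * apply Cmod_sqr_csum_le.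
  - rewrite rsum_swap. apply rsum_le. intros i Hi. rewrite rsum_scal.
    apply Rmult_le_compat_l; [apply pow_le; lra|]. now apply rsum_le_sqnorm, HX.
Qed.

(* A series of vectors [F i] such that [F i] vanishes below [i] is a pointwise finite sum. *)
Lemma sqnorm_series_le (F : nat -> nat -> C) (beta : nat -> R) B :
  (forall i p, (p < i)%nat -> F i p = 0%C) -> (forall i, in_X om (F i)) ->
  (forall i, 2 ^ S i * sqnorm (F i) <= beta i) -> (forall n, rsum n beta <= B) ->
  in_X om (fun p => csum (S p) (fun i => F i p)) /\
  sqnorm (fun p => csum (S p) (fun i => F i p)) <= B.
Proof.
  intros Hv HX Hb HB. apply in_X_of_partial_le.
  - intros p Hp. apply csum_zero. intros i _. now apply (proj1 (HX i)).
  - intros n. destruct (sqnorm_vsum_le n F (fun i _ => HX i)) as [G1 G2].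
    rewrite (rsum_ext n _ (wterm (vsum n F))).
    + eapply Rle_trans; [now apply rsum_le_sqnorm|]. eapply Rle_trans; [apply G2|].
      eapply Rle_trans; [|apply (HB n)]. apply rsum_le. intros; apply Hb.
    + intros p Hp. unfold wterm, vsum. do 3 f_equal.
      symmetry. apply csum_cut; [lia|]. intros i Hi. apply Hv. lia.
Qed.

End WeightedNorm.

Lemma collatz_even h : collatz (2 * h) = h.
Proof. unfold collatz. rewrite Nat.even_even. apply Nat.div2_double. Qed.

Lemma collatz_odd h : collatz (2 * h + 1) = (3 * h + 2)%nat.
Proof.
  unfold collatz. rewrite Nat.even_odd.
  replace (3 * (2 * h + 1) + 1)%nat with (2 * (3 * h + 2))%nat by lia. apply Nat.div2_double.
Qed.

Lemma even_or_odd j : (exists h, j = 2 * h)%nat \/ (exists h, j = 2 * h + 1)%nat.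
Proof. destruct (Nat.Even_or_Odd j) as [[h H]|[h H]]; [left|right]; exists h; lia. Qed.

Lemma collatz_le j : (j <= 2 * collatz j)%nat.
Proof.
  destruct (even_or_odd j) as [[h ->]|[h ->]];
    [rewrite collatz_even|rewrite collatz_odd]; lia.
Qed.

Lemma Top_eq c m : Top c m = if (m <? 3)%nat then 0%C else
  csum (2 * m - 2) (fun i => if Nat.eqb (collatz (3 + i)) m then c (3 + i)%nat else 0%C).
Proof.
  unfold Top. destruct (m <? 3)%nat; [reflexivity|].
  generalize 3%nat as a. generalize (2 * m - 2)%nat as n.
  induction n as [|n IH]; intros a; [reflexivity|].
  rewrite csum_shift. simpl seq. simpl filter. rewrite Nat.add_0_r.
  rewrite (csum_ext n _ (fun i => if Nat.eqb (collatz (S a + i)) m then c (S a + i)%nat else 0%C))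
    by (intros; now rewrite Nat.add_succ_r).
  rewrite <- IH. destruct (collatz a =? m)%nat; simpl; ring.
Qed.

Lemma zero_below3_Top c : zero_below3 (Top c).
Proof. intros m Hm. rewrite Top_eq. destruct (Nat.ltb_spec m 3); [reflexivity|lia]. Qed.

Lemma Top_vadd x y : Top (vadd x y) = vadd (Top x) (Top y).
Proof.
  apply functional_extensionality; intros m. unfold vadd. rewrite !Top_eq.
  destruct (m <? 3)%nat; [ring|]. rewrite <- csum_plus. apply csum_ext; intros.
  destruct (collatz (3 + i) =? m)%nat; ring.
Qed.

Lemma Top_vscal k x : Top (vscal k x) = vscal k (Top x).
Proof.
  apply functional_extensionality; intros m. unfold vscal. rewrite !Top_eq.
  destruct (m <? 3)%nat; [ring|]. rewrite <- csum_scal. apply csum_ext; intros.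
  destruct (collatz (3 + i) =? m)%nat; ring.
Qed.

Lemma Top_vzero : Top vzero = vzero.
Proof.
  replace vzero with (vscal 0%C vzero) at 1
    by (apply functional_extensionality; intros; unfold vscal, vzero; ring).
  rewrite Top_vscal. apply functional_extensionality; intros; unfold vscal, vzero; ring.
Qed.

Lemma Top_sub x y : Top (Csub_seq x y) = Csub_seq (Top x) (Top y).
Proof.
  replace (Csub_seq x y) with (vadd x (vscal (-1) y))
    by (apply functional_extensionality; intros; unfold vadd, vscal, Csub_seq; ring).
  rewrite Top_vadd, Top_vscal.
  apply functional_extensionality; intros; unfold vadd, vscal, Csub_seq; ring.
Qed.

Lemma Top_vsum n X : Top (vsum n X) = vsum n (fun i => Top (X i)).
Proof.
  induction n.
  - apply Top_vzero.
  - change (vsum (S n) X) with (vadd (vsum n X) (X n)). now rewrite Top_vadd, IHn.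
Qed.

Definition Topn (k : nat) : (nat -> C) -> nat -> C := Nat.iter k Top.

Lemma Topn_succ_r k x : Topn (S k) x = Topn k (Top x).
Proof. apply Nat.iter_succ_r. Qed.

Lemma Topn_add a b x : Topn (a + b) x = Topn a (Topn b x).
Proof. apply Nat.iter_add. Qed.

Lemma Topn_vadd k x y : Topn k (vadd x y) = vadd (Topn k x) (Topn k y).
Proof. induction k; [reflexivity|]. simpl. now rewrite IHk, Top_vadd. Qed.

Lemma Topn_vscal k c x : Topn k (vscal c x) = vscal c (Topn k x).
Proof. induction k; [reflexivity|]. simpl. now rewrite IHk, Top_vscal. Qed.

Lemma Topn_vzero k : Topn k vzero = vzero.
Proof. induction k; [reflexivity|]. simpl. now rewrite IHk, Top_vzero. Qed.

Lemma Topn_sub k x y : Topn k (Csub_seq x y) = Csub_seq (Topn k x) (Topn k y).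
Proof. induction k; [reflexivity|]. simpl. now rewrite IHk, Top_sub. Qed.

Lemma Topn_vsum k n X : Topn k (vsum n X) = vsum n (fun i => Topn k (X i)).
Proof. induction k; [reflexivity|]. simpl. now rewrite IHk, Top_vsum. Qed.

Lemma Topn_bounded om : (forall n, (1 <= n)%nat -> 0 < om n) -> bounded_on_X om ->
  exists K, 1 <= K /\ forall n c, in_X om c ->
    in_X om (Topn n c) /\ sqnorm om (Topn n c) <= K ^ n * sqnorm om c.
Proof.
  intros om_pos [M HM]. set (K := Rmax 1 (Rabs M)).
  assert (HK : 1 <= K) by apply Rmax_l.
  assert (HMK : M <= K) by (pose proof (Rle_abs M); pose proof (Rmax_r 1 (Rabs M)); unfold K; lra).
  exists (K ^ 2). split; [nra|].
  induction n as [|n IH]; intros c Hc; [simpl; split; [exact Hc|lra]|].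
  destruct (IH c Hc) as [Hn Bn]. destruct (HM _ Hn) as [HT BT].
  change (Topn (S n) c) with (Top (Topn n c)). split; [exact HT|].
  rewrite !normX_sqnorm in BT.
  assert (Top_sq : sqnorm om (Top (Topn n c)) <= K ^ 2 * sqnorm om (Topn n c)).
  { pose proof (sqrt_pos (sqnorm om (Topn n c))).
    pose proof (sqrt_pos (sqnorm om (Top (Topn n c)))).
    rewrite <- (sqrt_sqrt (sqnorm om (Top (Topn n c)))) by now apply sqnorm_nonneg.
    rewrite <- (sqrt_sqrt (sqnorm om (Topn n c))) by now apply sqnorm_nonneg.
    assert (sqrt (sqnorm om (Top (Topn n c))) <= K * sqrt (sqnorm om (Topn n c))) by nra.
    simpl. nra. }
  replace ((K ^ 2) ^ S n) with (K ^ 2 * (K ^ 2) ^ n) by reflexivity.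
  rewrite Rmult_assoc. eapply Rle_trans; [exact Top_sq|].
  apply Rmult_le_compat_l; [nra|exact Bn].
Qed.

Definition dbl (x : nat -> C) : nat -> C := fun p => if Nat.even p then x (Nat.div2 p) else 0%C.
Definition dbln (n : nat) : (nat -> C) -> nat -> C := Nat.iter n dbl.

Lemma dbl_even x h : dbl x (2 * h) = x h.
Proof. unfold dbl. now rewrite Nat.even_even, Nat.div2_double. Qed.

Lemma dbl_odd x h : dbl x (2 * h + 1) = 0%C.
Proof. unfold dbl. now rewrite Nat.even_odd. Qed.

Lemma zero_below3_dbln n x : zero_below3 x -> zero_below3 (dbln n x).
Proof.
  intros Hx; induction n as [|n IH]; [exact Hx|]. intros p Hp. simpl.
  destruct (even_or_odd p) as [[h ->]|[h ->]]; [rewrite dbl_even; apply IH; lia|apply dbl_odd].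
Qed.

Lemma Top_dbl x : zero_below3 x -> Top (dbl x) = x.
Proof.
  intros Hx. apply functional_extensionality; intros m. rewrite Top_eq.
  destruct (Nat.ltb_spec m 3); [symmetry; now apply Hx|].
  rewrite (csum_ext _ _ (fun i => if Nat.eqb i (2 * m - 3) then x m else 0%C)).
  - rewrite csum_single. destruct (Nat.ltb_spec (2 * m - 3) (2 * m - 2)); [reflexivity|lia].
  - intros i Hi. destruct (even_or_odd (3 + i)) as [[h Hh]|[h Hh]]; rewrite Hh.
    + rewrite collatz_even, dbl_even.
      destruct (Nat.eqb_spec h m), (Nat.eqb_spec i (2 * m - 3)); subst; now try lia.
    + rewrite collatz_odd, dbl_odd.
      destruct (Nat.eqb_spec (3 * h + 2) m), (Nat.eqb_spec i (2 * m - 3)); now try lia.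
Qed.

Lemma Topn_dbln n x : zero_below3 x -> Topn n (dbln n x) = x.
Proof.
  intros Hx; induction n as [|n IH]; [reflexivity|].
  rewrite Topn_succ_r. change (dbln (S n) x) with (dbl (dbln n x)).
  now rewrite Top_dbl by (now apply zero_below3_dbln).
Qed.

Lemma Topn_dbln_ge k n x : zero_below3 x -> (n <= k)%nat -> Topn k (dbln n x) = Topn (k - n) x.
Proof.
  intros Hx Hk. replace k with (k - n + n)%nat at 1 by lia.
  now rewrite Topn_add, Topn_dbln.
Qed.

Lemma dbln_below n x : zero_below3 x -> forall p, (p < 3 * 2 ^ n)%nat -> dbln n x p = 0%C.
Proof.
  intros Hx; induction n as [|n IH]; intros p Hp; [apply Hx; simpl in Hp; lia|]. simpl.
  destruct (even_or_odd p) as [[h ->]|[h ->]]; [|apply dbl_odd].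
  rewrite dbl_even. apply IH. rewrite Nat.pow_succ_r' in Hp. lia.
Qed.

Lemma dbln_above n (x : nat -> C) Q : (forall p, (Q <= p)%nat -> x p = 0%C) ->
  forall p, (2 ^ n * Q <= p)%nat -> dbln n x p = 0%C.
Proof.
  intros HQ; induction n as [|n IH]; intros p Hp; [apply HQ; simpl in Hp; lia|]. simpl.
  destruct (even_or_odd p) as [[h ->]|[h ->]]; [|apply dbl_odd].
  rewrite dbl_even. apply IH. rewrite Nat.pow_succ_r' in Hp. lia.
Qed.

Lemma rsum_dbln n : forall (F : C -> nat -> R) x N, (forall p, F 0%C p = 0) ->
  rsum (2 ^ n * N) (fun p => F (dbln n x p) p) = rsum N (fun l => F (x l) (2 ^ n * l)%nat).
Proof.
  induction n as [|n IH]; intros F x N F0.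
  - simpl. rewrite Nat.add_0_r. apply rsum_ext. intros. now rewrite Nat.add_0_r.
  - replace (2 ^ S n * N)%nat with (2 * (2 ^ n * N))%nat by (rewrite Nat.pow_succ_r'; lia).
    change (fun p => F (dbln (S n) x p) p) with (fun p => F (dbl (dbln n x) p) p).
    rewrite rsum_even_odd.
    rewrite (rsum_zero _ (fun i => F (dbl _ (2 * i + 1)%nat) _)) by (intros; now rewrite dbl_odd).
    rewrite (rsum_ext _ (fun i => F (dbl _ (2 * i)%nat) _) (fun i => F (dbln n x i) (2 * i)%nat))
      by (intros; now rewrite dbl_even).
    rewrite (IH (fun c q => F c (2 * q)%nat)) by auto. rewrite Rplus_0_r.
    apply rsum_ext. intros. f_equal. rewrite Nat.pow_succ_r'. lia.
Qed.

Section DoublingShift.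

Variable om : nat -> R.
Hypothesis om_pos : forall n, (1 <= n)%nat -> 0 < om n.
Hypothesis om_lim : forall k, (3 <= k)%nat -> is_lim_seq (fun n => om (k * 2 ^ n)%nat) p_infty.

Lemma sqnorm_dbln_le n y Q : zero_below3 y -> (forall p, (Q <= p)%nat -> y p = 0%C) ->
  in_X om (dbln n y) /\
  sqnorm om (dbln n y) <= rsum Q (fun l => Cmod (y l) ^ 2 / om (2 ^ n * l)%nat).
Proof.
  intros Hy HQ. apply in_X_of_partial_le; [exact om_pos|now apply zero_below3_dbln|]. intros m.
  rewrite <- (rsum_dbln n (fun c p => Cmod c ^ 2 / om p))
    by (intros; rewrite Cmod_0; unfold Rdiv; ring).
  change (fun p => Cmod (dbln n y p) ^ 2 / om p) with (wterm om (dbln n y)).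
  destruct (Nat.le_gt_cases m (2 ^ n * Q)).
  - apply rsum_mono; auto. intros; apply wterm_nonneg; auto. now apply zero_below3_dbln.
  - rewrite (rsum_cut m (2 ^ n * Q)); [lra|lia|]. intros i Hi.
    unfold wterm. rewrite (dbln_above n y Q HQ), Cmod_0 by lia. unfold Rdiv; ring.
Qed.

Lemma weighted_tail_small (y : nat -> C) Q : zero_below3 y -> forall eps, 0 < eps ->
  exists M, forall n, (M <= n)%nat -> rsum Q (fun l => Cmod (y l) ^ 2 / om (2 ^ n * l)%nat) <= eps.
Proof.
  intros Hy. induction Q as [|Q IH]; intros eps Heps; [exists 0%nat; intros; simpl; lra|].
  destruct (IH (eps / 2)) as [M1 HM1]; [lra|]. cbn [rsum].
  destruct (Nat.lt_ge_cases Q 3) as [HQ|HQ].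
  - exists M1. intros n Hn. rewrite Hy, Cmod_0 by exact HQ. specialize (HM1 n Hn).
    unfold Rdiv. lra.
  - set (A := Cmod (y Q) ^ 2). assert (HA : 0 <= A) by apply pow2_ge_0.
    destruct (proj2 (is_lim_seq_spec _ _) (om_lim Q HQ) (2 * A / eps)) as [M2 HM2].
    exists (Nat.max M1 M2). intros n Hn.
    specialize (HM1 n ltac:(lia)). specialize (HM2 n ltac:(lia)). rewrite Nat.mul_comm in HM2.
    assert (A / om (2 ^ n * Q)%nat <= eps / 2); [|lra].
    assert (Hpos : 0 < om (2 ^ n * Q)%nat)
      by (apply om_pos; pose proof (Nat.pow_nonzero 2 n ltac:(lia)); nia).
    apply Rle_div_l; [exact Hpos|].
    apply Rmult_lt_compat_r with (r := eps) in HM2; [|lra].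
    unfold Rdiv in HM2. rewrite Rmult_assoc, Rinv_l in HM2; lra.
Qed.

Lemma sqnorm_dbln_small y : zero_below3 y -> finitely_supported y -> forall eps, 0 < eps ->
  exists M, forall n, (M <= n)%nat -> in_X om (dbln n y) /\ sqnorm om (dbln n y) <= eps.
Proof.
  intros Hy [Q HQ] eps Heps. destruct (weighted_tail_small y Q Hy eps Heps) as [M HM].
  exists M. intros n Hn. destruct (sqnorm_dbln_le n y Q Hy HQ) as [X B].
  split; [exact X|]. eapply Rle_trans; [exact B|]. now apply HM.
Qed.

End DoublingShift.

Lemma Top_basis b : (3 <= b)%nat ->
  Top (basis b) = if (collatz b <? 3)%nat then vzero else basis (collatz b).
Proof.
  intros Hb. apply functional_extensionality; intros m. rewrite Top_eq.
  pose proof (collatz_le b) as Hcb.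
  destruct (Nat.ltb_spec m 3).
  - unfold basis, vzero. destruct (Nat.ltb_spec (collatz b) 3); [reflexivity|].
    destruct (Nat.eqb_spec m (collatz b)); [lia|reflexivity].
  - rewrite (csum_ext _ _ (fun i => if Nat.eqb i (b - 3) then
                                     (if Nat.eqb (collatz b) m then 1%C else 0%C) else 0%C)).
    + rewrite csum_single. unfold basis, vzero.
      destruct (Nat.ltb_spec (collatz b) 3), (Nat.eqb_spec (collatz b) m),
        (Nat.eqb_spec m (collatz b)); try lia; try now destruct (b - 3 <? 2 * m - 2)%nat.
      destruct (Nat.ltb_spec (b - 3) (2 * m - 2)); [reflexivity|lia].
    + intros i Hi. unfold basis.
      destruct (Nat.eqb_spec (3 + i) b), (Nat.eqb_spec i (b - 3)); try lia; try subst b;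
        now destruct (collatz (3 + i) =? m)%nat.
Qed.

Definition collatz_iter (n j : nat) : nat := Nat.iter n collatz j.

Fixpoint orbit_above3 (N j : nat) : bool :=
  match N with
  | O => (3 <=? j)%nat
  | S N => (orbit_above3 N j && (3 <=? collatz_iter (S N) j))%bool
  end.

Lemma orbit_above3_last N j : orbit_above3 N j = true -> (3 <= collatz_iter N j)%nat.
Proof.
  destruct N; simpl; intros H; [now apply Nat.leb_le|].
  apply andb_prop in H. now apply Nat.leb_le.
Qed.

Lemma Topn_basis N j : (3 <= j)%nat ->
  Topn N (basis j) = if orbit_above3 N j then basis (collatz_iter N j) else vzero.
Proof.
  intros Hj. induction N as [|N IH].
  - cbn [orbit_above3 Topn collatz_iter Nat.iter]. destruct (Nat.leb_spec 3 j); [reflexivity|lia].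
  - change (Topn (S N) (basis j)) with (Top (Topn N (basis j))). rewrite IH.
    change (orbit_above3 (S N) j) with (orbit_above3 N j && (3 <=? collatz_iter (S N) j))%bool.
    destruct (orbit_above3 N j) eqn:HA; [|apply Top_vzero].
    rewrite Top_basis by (now apply orbit_above3_last). rewrite Bool.andb_true_l.
    change (collatz (collatz_iter N j)) with (collatz_iter (S N) j).
    destruct (Nat.ltb_spec (collatz_iter (S N) j) 3), (Nat.leb_spec 3 (collatz_iter (S N) j));
      [lia|reflexivity|reflexivity|lia].
Qed.

Lemma collatz_iter_mult3 N x :
  (collatz_iter N x mod 3 = 0)%nat -> x = (2 ^ N * collatz_iter N x)%nat.
Proof.
  revert x; induction N as [|N IH]; intros x H; [simpl; lia|].
  change (collatz_iter (S N) x) with (collatz (collatz_iter N x)) in *.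
  destruct (even_or_odd (collatz_iter N x)) as [[h Hh]|[h Hh]]; rewrite Hh in *.
  - rewrite collatz_even in *. rewrite (IH x) by (rewrite Hh; lia).
    rewrite Hh, Nat.pow_succ_r'. lia.
  - rewrite collatz_odd in H. lia.
Qed.

(* A multiple of 3 has only finitely many Collatz ancestors, all of them powers of 2 times it. *)
Lemma collatz_iter_not_mult3 N j : (j <= N)%nat -> orbit_above3 N j = true ->
  (collatz_iter N j mod 3 <> 0)%nat.
Proof.
  intros HN HA Hm. pose proof (orbit_above3_last N j HA). pose proof (collatz_iter_mult3 N j Hm).
  pose proof (Nat.pow_gt_lin_r 2 N ltac:(lia)). nia.
Qed.

Lemma pow4_mod3 n : exists q, (4 ^ n = 3 * q + 1)%nat.
Proof.
  induction n as [|n [q Hq]]; [now exists 0%nat|]. exists (4 * q + 1)%nat.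
  rewrite Nat.pow_succ_r'. lia.
Qed.

(* For [a] prime to 3, [2 ^ (pre_exp a i + 1) * a = 1 mod 3], so [odd_pre a i] is an
   integer; it is odd and [collatz (odd_pre a i) = 2 ^ pre_exp a i * a].  Doubling it
   [N - pre_exp a i - 1] times gives preimages of [a] under [collatz^N], distinct for
   distinct [i]. *)
Definition pre_exp (a i : nat) : nat := (2 * i + 1 + (if (a mod 3 =? 2)%nat then 1 else 0))%nat.
Definition odd_pre (a i : nat) : nat := ((2 ^ (pre_exp a i + 1) * a - 1) / 3)%nat.
Definition preimage (N a i : nat) : nat := (2 ^ (N - pre_exp a i - 1) * odd_pre a i)%nat.

Lemma pre_exp_le a i : (pre_exp a i <= 2 * i + 2)%nat.
Proof. unfold pre_exp. destruct (a mod 3 =? 2)%nat; lia. Qed.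

Lemma odd_pre_spec a i :
  (a mod 3 <> 0)%nat -> (3 * odd_pre a i + 1 = 2 ^ (pre_exp a i + 1) * a)%nat.
Proof.
  intros Ha. unfold odd_pre.
  enough (Hm : exists m, (2 ^ (pre_exp a i + 1) * a = 3 * m + 1)%nat).
  { destruct Hm as [m ->]. replace (3 * m + 1 - 1)%nat with (m * 3)%nat by lia.
    rewrite Nat.div_mul by lia. lia. }
  destruct (pow4_mod3 (i + 1)) as [q Hq]. unfold pre_exp.
  pose proof (Nat.div_mod a 3 ltac:(lia)). pose proof (Nat.mod_upper_bound a 3 ltac:(lia)).
  set (w := (a / 3)%nat) in *.
  destruct (Nat.eqb_spec (a mod 3) 2) as [E|E].
  - replace (2 * i + 1 + 1 + 1)%nat with (S (2 * (i + 1))) by lia.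
    rewrite Nat.pow_succ_r', Nat.pow_mul_r. change (2 ^ 2)%nat with 4%nat. rewrite Hq.
    exists (2 * q * a + 2 * w + 1)%nat. lia.
  - replace (2 * i + 1 + 0 + 1)%nat with (2 * (i + 1))%nat by lia.
    rewrite Nat.pow_mul_r. change (2 ^ 2)%nat with 4%nat. rewrite Hq.
    exists (q * a + w)%nat. lia.
Qed.

Lemma odd_pre_props a i : (3 <= a)%nat -> (a mod 3 <> 0)%nat ->
  (3 <= odd_pre a i)%nat /\ collatz (odd_pre a i) = (2 ^ pre_exp a i * a)%nat.
Proof.
  intros Ha Hm. pose proof (odd_pre_spec a i Hm) as E.
  replace (pre_exp a i + 1)%nat with (S (pre_exp a i)) in E by lia. rewrite Nat.pow_succ_r' in E.
  pose proof (Nat.pow_nonzero 2 (pre_exp a i) ltac:(lia)).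
  destruct (even_or_odd (odd_pre a i)) as [[h Hh]|[h Hh]]; rewrite Hh in *.
  - exfalso. lia.
  - rewrite collatz_odd. split; nia.
Qed.

Lemma Topn_basis_double r x : (3 <= x)%nat -> Topn r (basis (2 ^ r * x)) = basis x.
Proof.
  revert x; induction r as [|r IH]; intros x Hx; [simpl; now rewrite Nat.add_0_r|].
  pose proof (Nat.pow_nonzero 2 r ltac:(lia)).
  rewrite Topn_succ_r, Nat.pow_succ_r', <- Nat.mul_assoc, Top_basis by nia.
  rewrite collatz_even. destruct (Nat.ltb_spec (2 ^ r * x) 3); [nia|]. now apply IH.
Qed.

Section Preimages.

Variables (N a : nat).
Hypothesis a_ge3 : (3 <= a)%nat.
Hypothesis a_not_mult3 : (a mod 3 <> 0)%nat.

Lemma Topn_basis_preimage i :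
  (pre_exp a i + 1 <= N)%nat -> Topn N (basis (preimage N a i)) = basis a.
Proof.
  intros HN. destruct (odd_pre_props a i a_ge3 a_not_mult3) as [Ht Hc].
  unfold preimage. replace N with (pre_exp a i + (1 + (N - pre_exp a i - 1)))%nat at 1 by lia.
  rewrite !Topn_add, Topn_basis_double by exact Ht.
  change (Topn 1 (basis (odd_pre a i))) with (Top (basis (odd_pre a i))).
  rewrite Top_basis, Hc by exact Ht. pose proof (Nat.pow_nonzero 2 (pre_exp a i) ltac:(lia)).
  destruct (Nat.ltb_spec (2 ^ pre_exp a i * a) 3); [nia|]. now apply Topn_basis_double.
Qed.

Lemma preimage_spec i : (pre_exp a i + 1 <= N)%nat ->
  (3 * preimage N a i + 2 ^ (N - pre_exp a i - 1) = 2 ^ N * a)%nat.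
Proof.
  intros HN. pose proof (odd_pre_spec a i a_not_mult3) as E. unfold preimage.
  replace (2 ^ N)%nat with (2 ^ (N - pre_exp a i - 1) * 2 ^ (pre_exp a i + 1))%nat
    by (rewrite <- Nat.pow_add_r; f_equal; lia).
  rewrite <- Nat.mul_assoc, <- E. lia.
Qed.

Lemma preimage_inj i j : (pre_exp a i + 1 <= N)%nat -> (pre_exp a j + 1 <= N)%nat ->
  preimage N a i = preimage N a j -> i = j.
Proof.
  intros Hi Hj E. pose proof (preimage_spec i Hi). pose proof (preimage_spec j Hj).
  assert (2 ^ (N - pre_exp a i - 1) = 2 ^ (N - pre_exp a j - 1))%nat as P by lia.
  apply Nat.pow_inj_r in P; [|lia]. unfold pre_exp in *. lia.
Qed.

Lemma preimage_ge3 i : (3 <= preimage N a i)%nat.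
Proof.
  destruct (odd_pre_props a i a_ge3 a_not_mult3). unfold preimage.
  pose proof (Nat.pow_nonzero 2 (N - pre_exp a i - 1) ltac:(lia)). nia.
Qed.

End Preimages.

Lemma rsum_indicator_inj n (b : nat -> nat) p :
  (forall i j, (i < n)%nat -> (j < n)%nat -> b i = b j -> i = j) ->
  rsum n (fun i => if Nat.eqb p (b i) then 1 else 0) <= 1.
Proof.
  induction n as [|n IH]; intros Hinj; simpl; [lra|].
  destruct (Nat.eqb_spec p (b n)) as [E|E].
  - rewrite rsum_zero; [lra|]. intros i Hi. destruct (Nat.eqb_spec p (b i)); [|reflexivity].
    exfalso. assert (i = n) by (apply Hinj; lia). lia.
  - enough (rsum n (fun i => if Nat.eqb p (b i) then 1 else 0) <= 1) by lra.
    apply IH. intros; apply Hinj; lia.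
Qed.

(* The average of [L + 1] basis vectors, all mapped to [basis a] by [T^N]. *)
Definition spread (N L a : nat) : nat -> C :=
  vsum (S L) (fun i => vscal (RtoC (/ INR (S L))) (basis (preimage N a i))).

Definition preimage_count (N L a p : nat) : R :=
  rsum (S L) (fun i => if Nat.eqb p (preimage N a i) then 1 else 0).

Lemma spread_apply N L a p : spread N L a p = RtoC (/ INR (S L) * preimage_count N L a p).
Proof.
  unfold spread, vsum, vscal, preimage_count. rewrite <- rsum_scal, <- csum_RtoC.
  apply csum_ext. intros i _. unfold basis.
  destruct (Nat.eqb (p) (preimage N a i)); rewrite <- RtoC_mult; f_equal; ring.
Qed.

Section Spread.

Variables (N L a : nat).
Hypothesis a_ge3 : (3 <= a)%nat.
Hypothesis a_not_mult3 : (a mod 3 <> 0)%nat.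
Hypothesis N_large : (2 * L + 4 <= N)%nat.

Lemma pre_exp_small i : (i < S L)%nat -> (pre_exp a i + 1 <= N)%nat.
Proof. intros Hi. pose proof (pre_exp_le a i). lia. Qed.

Lemma Topn_spread : Topn N (spread N L a) = basis a.
Proof.
  unfold spread. rewrite Topn_vsum.
  apply functional_extensionality; intros p. unfold vsum.
  rewrite (csum_ext _ _ (fun _ => (RtoC (/ INR (S L)) * basis a p)%C)).
  - rewrite csum_const, Cmult_assoc, <- RtoC_mult, Rinv_r; [ring|]. apply not_0_INR; lia.
  - intros i Hi. rewrite Topn_vscal, Topn_basis_preimage; auto. now apply pre_exp_small.
Qed.

Lemma preimage_count_bounds p : 0 <= preimage_count N L a p <= 1.
Proof.
  split; [apply rsum_nonneg; intros; destruct (Nat.eqb p (preimage N a i)); lra|].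
  apply rsum_indicator_inj. intros i j Hi Hj.
  apply preimage_inj; auto; now apply pre_exp_small.
Qed.

Lemma preimage_count_below3 p : (p < 3)%nat -> preimage_count N L a p = 0.
Proof.
  intros Hp. apply rsum_zero. intros i _. pose proof (preimage_ge3 N a a_ge3 a_not_mult3 i).
  destruct (Nat.eqb_spec p (preimage N a i)); [lia|reflexivity].
Qed.

Lemma zero_below3_spread : zero_below3 (spread N L a).
Proof.
  intros p Hp. rewrite spread_apply, preimage_count_below3 by exact Hp. now rewrite Rmult_0_r.
Qed.

Lemma finitely_supported_spread : finitely_supported (spread N L a).
Proof.
  exists (2 ^ N * a)%nat. intros p Hp. rewrite spread_apply.
  unfold preimage_count. rewrite rsum_zero; [now rewrite Rmult_0_r|]. intros i Hi.
  pose proof (preimage_spec N a a_ge3 a_not_mult3 i (pre_exp_small i Hi)).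
  destruct (Nat.eqb_spec p (preimage N a i)); [|reflexivity].
  pose proof (Nat.pow_nonzero 2 (N - pre_exp a i - 1) ltac:(lia)). lia.
Qed.

Variable om : nat -> R.
Variable delta : R.
Hypothesis delta_pos : 0 < delta.
Hypothesis om_ge : forall n, (1 <= n)%nat -> delta <= om n.

Lemma wterm_spread_le p :
  wterm om (spread N L a) p <= preimage_count N L a p / (INR (S L) ^ 2 * delta).
Proof.
  set (l := INR (S L)).
  assert (Hl : 1 <= l) by (unfold l; rewrite S_INR; pose proof (pos_INR L); lra).
  set (c := preimage_count N L a p). pose proof (preimage_count_bounds p) as Hc. fold c in Hc.
  unfold wterm. rewrite spread_apply, Cmod_R, pow2_abs. fold l c.
  destruct (Nat.lt_ge_cases p 3).
  - unfold c. rewrite preimage_count_below3 by auto. unfold Rdiv. simpl. lra.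
  - assert (delta <= om p) by (apply om_ge; lia).
    assert (0 < / l ^ 2) by (apply Rinv_0_lt_compat; nra).
    unfold Rdiv. rewrite Rpow_mult_distr, pow_inv, Rinv_mult.
    replace (c * (/ l ^ 2 * / delta)) with (/ l ^ 2 * c * / delta) by ring.
    apply Rmult_le_compat.
    + nra.
    + left; apply Rinv_0_lt_compat; lra.
    + apply Rmult_le_compat_l; nra.
    + apply Rinv_le_contravar; lra.
Qed.

Lemma sqnorm_spread_le :
  in_X om (spread N L a) /\ sqnorm om (spread N L a) <= / (INR (S L) * delta).
Proof.
  set (l := INR (S L)).
  assert (Hl : 1 <= l) by (unfold l; rewrite S_INR; pose proof (pos_INR L); lra).
  apply in_X_of_partial_le; [intros; apply Rlt_le_trans with delta; auto|exact zero_below3_spread|].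
  intros m. eapply Rle_trans; [apply rsum_le; intros; apply wterm_spread_le|]. fold l.
  unfold Rdiv. rewrite (rsum_ext m _ (fun p => / (l ^ 2 * delta) * preimage_count N L a p))
    by (intros; ring).
  rewrite rsum_scal. unfold preimage_count. rewrite rsum_swap.
  assert (rsum (S L) (fun i => rsum m (fun p => if Nat.eqb p (preimage N a i) then 1 else 0)) <= l).
  { unfold l. rewrite <- (Rmult_1_r (INR (S L))), <- rsum_const.
    apply rsum_le. intros i _. apply rsum_indicator. }
  replace (/ (l * delta)) with (/ (l ^ 2 * delta) * l) by (field; lra).
  apply Rmult_le_compat_l; [|lra].
  left; apply Rinv_0_lt_compat, Rmult_lt_0_compat; [apply pow_lt|]; lra.
Qed.

End Spread.

Definition kernel_approx (N L j : nat) : nat -> C :=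
  if orbit_above3 N j then Csub_seq (basis j) (spread N L (collatz_iter N j)) else basis j.

Section KernelApprox.

Variables (N L j : nat).
Hypothesis j_ge3 : (3 <= j)%nat.
Hypothesis j_le : (j <= N)%nat.
Hypothesis N_large : (2 * L + 4 <= N)%nat.

Lemma Topn_kernel_approx : Topn N (kernel_approx N L j) = vzero.
Proof.
  unfold kernel_approx. destruct (orbit_above3 N j) eqn:HA.
  - pose proof (orbit_above3_last N j HA). pose proof (collatz_iter_not_mult3 N j j_le HA).
    rewrite Topn_sub, Topn_spread, Topn_basis, HA by auto.
    apply functional_extensionality; intros p; unfold Csub_seq, vzero; ring.
  - now rewrite Topn_basis, HA.
Qed.

Lemma zero_below3_kernel_approx : zero_below3 (kernel_approx N L j).
Proof.
  unfold kernel_approx. destruct (orbit_above3 N j) eqn:HA; [|now apply zero_below3_basis].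
  pose proof (orbit_above3_last N j HA). pose proof (collatz_iter_not_mult3 N j j_le HA).
  apply zero_below3_sub; [now apply zero_below3_basis|now apply zero_below3_spread].
Qed.

Lemma finitely_supported_kernel_approx : finitely_supported (kernel_approx N L j).
Proof.
  assert (Hb : forall p, (S j <= p)%nat -> basis j p = 0%C)
    by (intros p Hp; unfold basis; destruct (Nat.eqb_spec p j); [lia|reflexivity]).
  unfold kernel_approx. destruct (orbit_above3 N j) eqn:HA; [|now exists (S j)].
  pose proof (orbit_above3_last N j HA). pose proof (collatz_iter_not_mult3 N j j_le HA).
  destruct (finitely_supported_spread N L (collatz_iter N j)) as [Q HQ]; auto.
  exists (Nat.max (S j) Q). intros p Hp. unfold Csub_seq. rewrite Hb, HQ by lia. ring.
Qed.

Lemma sqnorm_basis_sub_kernel_approx om delta :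
  0 < delta -> (forall n, (1 <= n)%nat -> delta <= om n) ->
  in_X om (Csub_seq (basis j) (kernel_approx N L j)) /\
  sqnorm om (Csub_seq (basis j) (kernel_approx N L j)) <= / (INR (S L) * delta).
Proof.
  intros delta_pos om_ge. unfold kernel_approx. destruct (orbit_above3 N j) eqn:HA.
  - pose proof (orbit_above3_last N j HA). pose proof (collatz_iter_not_mult3 N j j_le HA).
    replace (Csub_seq (basis j) (Csub_seq (basis j) (spread N L (collatz_iter N j))))
      with (spread N L (collatz_iter N j))
      by (apply functional_extensionality; intros p; unfold Csub_seq; ring).
    now apply sqnorm_spread_le.
  - replace (Csub_seq (basis j) (basis j)) with vzero
      by (apply functional_extensionality; intros p; unfold Csub_seq, vzero; ring).
    destruct (in_X_vzero om) as [X0 B0]; [intros; apply Rlt_le_trans with delta; auto|].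
    split; [exact X0|]. enough (0 < / (INR (S L) * delta)) by lra.
    apply Rinv_0_lt_compat, Rmult_lt_0_compat; [apply lt_0_INR; lia|exact delta_pos].
Qed.

End KernelApprox.

Definition nat_stream (x r : nat) : nat :=
  fst (Cantor.of_nat (Nat.iter r (fun z => snd (Cantor.of_nat z)) x)).

Definition stream_code (l : list nat) : nat :=
  fold_right (fun h acc => Cantor.to_nat (h, acc)) 0%nat l.

Lemma nat_stream_code l r : (r < length l)%nat -> nat_stream (stream_code l) r = nth r l 0%nat.
Proof.
  revert r; induction l as [|h l IH]; intros r Hr; simpl in Hr; [lia|].
  change (stream_code (h :: l)) with (Cantor.to_nat (h, stream_code l)).
  unfold nat_stream. destruct r as [|r].
  - change (fst (Cantor.of_nat (Cantor.to_nat (h, stream_code l))) = h).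
    now rewrite Cantor.cancel_of_to.
  - rewrite Nat.iter_succ_r, Cantor.cancel_of_to. apply IH. lia.
Qed.

Lemma nat_stream_prefix (h : nat -> nat) n :
  exists x, forall r, (r < n)%nat -> nat_stream x r = h r.
Proof.
  exists (stream_code (map h (seq 0 n))). intros r Hr.
  rewrite nat_stream_code by (now rewrite length_map, length_seq).
  rewrite (nth_indep _ 0%nat (h 0%nat)) by (now rewrite length_map, length_seq).
  now rewrite map_nth, seq_nth.
Qed.

Lemma real_grid_approx (r : R) K : exists A B : nat,
  Rabs (r - (INR A - INR B) / INR (S K)) <= / INR (S K).
Proof.
  set (k := INR (S K)). assert (Hk : 0 < k) by (apply lt_0_INR; lia).
  destruct (base_Int_part (r * k)) as [H1 H2]. set (z := Int_part (r * k)) in *.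
  assert (Hz : exists A B : nat, INR A - INR B = IZR z).
  { destruct (Z_le_gt_dec 0 z).
    - exists (Z.to_nat z), 0%nat. rewrite (INR_IZR_INZ (Z.to_nat z)), Z2Nat.id by lia. simpl; lra.
    - exists 0%nat, (Z.to_nat (- z)).
      rewrite (INR_IZR_INZ (Z.to_nat (- z))), Z2Nat.id, opp_IZR by lia. simpl; lra. }
  destruct Hz as [A [B HAB]]. exists A, B. rewrite HAB.
  replace (r - IZR z / k) with ((r * k - IZR z) / k) by (field; lra).
  unfold Rdiv. rewrite Rabs_mult, Rabs_inv, (Rabs_right k) by lra.
  rewrite <- (Rmult_1_l (/ k)) at 2. apply Rmult_le_compat_r; [left; now apply Rinv_0_lt_compat|].
  apply Rabs_le. lra.
Qed.

(* Entries [4p .. 4p+3] of the stream [x] code a point of the grid (Z + i Z) / (K + 1),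
   each integer being a difference of two naturals. *)
Definition grid_coef (K x p : nat) : C :=
  ((INR (nat_stream x (4 * p)) - INR (nat_stream x (4 * p + 1))) / INR (S K),
   (INR (nat_stream x (4 * p + 2)) - INR (nat_stream x (4 * p + 3))) / INR (S K)).

Lemma Cmod_sqr_le_parts (z : C) r :
  Rabs (fst z) <= r -> Rabs (snd z) <= r -> Cmod z ^ 2 <= 2 * r ^ 2.
Proof.
  intros H1 H2. pose proof (pow2_ge_0 (fst z)). pose proof (pow2_ge_0 (snd z)).
  unfold Cmod. rewrite pow2_sqrt by lra.
  rewrite <- (pow2_abs (fst z)), <- (pow2_abs (snd z)).
  pose proof (Rabs_pos (fst z)). pose proof (Rabs_pos (snd z)).
  assert (Rabs (fst z) ^ 2 <= r ^ 2) by (apply pow_incr; lra).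
  assert (Rabs (snd z) ^ 2 <= r ^ 2) by (apply pow_incr; lra). lra.
Qed.

Lemma grid_approx (g : nat -> C) K P : exists x, forall p, (p < P)%nat ->
  Cmod (g p - grid_coef K x p) ^ 2 <= 2 * (/ INR (S K)) ^ 2.
Proof.
  assert (Hc : forall p, exists c : nat * nat * nat * nat,
    let '(A, B, C', D) := c in
    Rabs (fst (g p) - (INR A - INR B) / INR (S K)) <= / INR (S K) /\
    Rabs (snd (g p) - (INR C' - INR D) / INR (S K)) <= / INR (S K)).
  { intros p. destruct (real_grid_approx (fst (g p)) K) as [A [B HAB]].
    destruct (real_grid_approx (snd (g p)) K) as [C' [D HCD]]. now exists (A, B, C', D). }
  destruct (choice _ Hc) as [cf Hcf].
  set (h := fun r => let '(A, B, C', D) := cf (r / 4)%nat in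
                     match (r mod 4)%nat with 0 => A | 1 => B | 2 => C' | _ => D end).
  destruct (nat_stream_prefix h (4 * P)) as [x Hx]. exists x. intros p Hp.
  assert (Hs : forall q, (q < 4)%nat -> nat_stream x (4 * p + q) =
     let '(A, B, C', D) := cf p in match q with 0 => A | 1 => B | 2 => C' | _ => D end).
  { intros q Hq. rewrite Hx by lia. unfold h.
    replace ((4 * p + q) / 4)%nat with p by (apply Nat.div_unique with q; lia).
    replace ((4 * p + q) mod 4)%nat with q by (apply Nat.mod_unique with p; lia).
    reflexivity. }
  unfold grid_coef. rewrite <- (Nat.add_0_r (4 * p)) at 1. rewrite !Hs by lia.
  specialize (Hcf p). destruct (cf p) as [[[A B] C'] D]. destruct Hcf as [H1 H2].
  destruct (g p) as [gr gi]. simpl in H1, H2. unfold Rminus in H1, H2.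
  now apply Cmod_sqr_le_parts.
Qed.

Lemma nat_unbounded r : exists n : nat, r < INR n.
Proof.
  destruct (archimed r) as [H _]. exists (Z.to_nat (up r)).
  destruct (Z_le_gt_dec 0 (up r)).
  - rewrite INR_IZR_INZ, Z2Nat.id by lia. lra.
  - assert (IZR (up r) < 0) by (apply IZR_lt; lia). replace (Z.to_nat (up r)) with 0%nat by lia.
    simpl. lra.
Qed.

Lemma small_inverse A eps : 0 < eps -> exists n : nat, A / INR (S n) <= eps.
Proof.
  intros Heps. destruct (nat_unbounded (A / eps)) as [n Hn]. exists n.
  assert (Hk : A / eps < INR (S n)) by (rewrite S_INR; lra).
  apply Rle_div_l; [apply lt_0_INR; lia|].
  apply Rmult_lt_compat_r with (r := eps) in Hk; [|lra].
  unfold Rdiv in Hk. rewrite Rmult_assoc, Rinv_l in Hk; lra.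
Qed.

Definition combo_depth (P L : nat) : nat := (P + 2 * L + 4)%nat.

Definition kernel_combo (P L : nat) (c : nat -> C) : nat -> C :=
  vsum P (fun p => if (3 <=? p)%nat
                   then vscal (c p) (kernel_approx (combo_depth P L) L p) else vzero).

Definition basis_combo (P : nat) (c : nat -> C) : nat -> C :=
  fun q => if ((q <? P) && (3 <=? q))%bool then c q else 0%C.

Lemma Topn_kernel_combo P L c : Topn (combo_depth P L) (kernel_combo P L c) = vzero.
Proof.
  unfold kernel_combo. rewrite Topn_vsum.
  apply functional_extensionality; intros q. apply csum_zero. intros p Hp.
  destruct (Nat.leb_spec 3 p); [|now rewrite Topn_vzero].
  rewrite Topn_vscal, Topn_kernel_approx by (unfold combo_depth; lia).
  unfold vscal, vzero. ring.
Qed.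

Lemma zero_below3_kernel_combo P L c : zero_below3 (kernel_combo P L c).
Proof.
  apply zero_below3_vsum. intros p Hp.
  destruct (Nat.leb_spec 3 p); [|apply zero_below3_vzero].
  apply zero_below3_vscal, zero_below3_kernel_approx; unfold combo_depth; lia.
Qed.

Lemma finitely_supported_kernel_combo P L c : finitely_supported (kernel_combo P L c).
Proof.
  apply finitely_supported_vsum. intros p Hp.
  destruct (Nat.leb_spec 3 p); [|now exists 0%nat].
  destruct (finitely_supported_kernel_approx (combo_depth P L) L p) as [Q HQ];
    try (unfold combo_depth; lia).
  exists Q. intros q Hq. unfold vscal. rewrite HQ by exact Hq. ring.
Qed.

Lemma basis_combo_vsum P c :
  basis_combo P c = vsum P (fun p => if (3 <=? p)%nat then vscal (c p) (basis p) else vzero).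
Proof.
  apply functional_extensionality; intros q. unfold vsum.
  rewrite (csum_ext P _
    (fun p => if Nat.eqb p q then (if (3 <=? q)%nat then c q else 0%C) else 0%C)).
  - rewrite csum_single. unfold basis_combo. now destruct (q <? P)%nat, (3 <=? q)%nat.
  - intros p _. unfold vscal, basis, vzero.
    destruct (Nat.leb_spec 3 p); cbv beta; destruct (Nat.eqb_spec q p) as [->|Hqp].
    + rewrite Nat.eqb_refl. destruct (Nat.leb_spec 3 p); [ring|lia].
    + destruct (Nat.eqb_spec p q); [lia|ring].
    + rewrite Nat.eqb_refl. destruct (Nat.leb_spec 3 p); [lia|ring].
    + destruct (Nat.eqb_spec p q); [lia|ring].
Qed.

Lemma vsum_sub n X Y : Csub_seq (vsum n X) (vsum n Y) = vsum n (fun i => Csub_seq (X i) (Y i)).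
Proof.
  apply functional_extensionality; intros q. unfold Csub_seq, vsum.
  induction n; simpl; [ring|]. rewrite <- IHn. ring.
Qed.

Lemma basis_combo_sub_kernel_combo P L c :
  Csub_seq (basis_combo P c) (kernel_combo P L c) =
  vsum P (fun p => if (3 <=? p)%nat
                   then vscal (c p) (Csub_seq (basis p) (kernel_approx (combo_depth P L) L p))
                   else vzero).
Proof.
  rewrite basis_combo_vsum. unfold kernel_combo. rewrite vsum_sub. f_equal.
  apply functional_extensionality; intros p. apply functional_extensionality; intros q.
  unfold Csub_seq, vscal, vzero. destruct (3 <=? p)%nat; ring.
Qed.

Section Density.

Variable om : nat -> R.
Variable delta : R.
Hypothesis delta_pos : 0 < delta.
Hypothesis om_ge : forall n, (1 <= n)%nat -> delta <= om n.

Let om_pos : forall n, (1 <= n)%nat -> 0 < om n :=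
  fun n Hn => Rlt_le_trans _ _ _ delta_pos (om_ge n Hn).

Lemma sqnorm_basis_combo_sub_kernel_combo P L c :
  in_X om (Csub_seq (basis_combo P c) (kernel_combo P L c)) /\
  sqnorm om (Csub_seq (basis_combo P c) (kernel_combo P L c)) <=
  rsum P (fun p => 2 ^ S p * Cmod (c p) ^ 2) / (INR (S L) * delta).
Proof.
  set (r := / (INR (S L) * delta)).
  assert (Hr : 0 < r) by (apply Rinv_0_lt_compat, Rmult_lt_0_compat; [apply lt_0_INR; lia|lra]).
  rewrite basis_combo_sub_kernel_combo.
  set (Z := fun p => if (3 <=? p)%nat
                     then vscal (c p) (Csub_seq (basis p) (kernel_approx (combo_depth P L) L p))
                     else vzero).
  assert (HZ : forall p, (p < P)%nat -> in_X om (Z p) /\ sqnorm om (Z p) <= Cmod (c p) ^ 2 * r).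
  { intros p Hp. unfold Z. destruct (Nat.leb_spec 3 p).
    - destruct (sqnorm_basis_sub_kernel_approx (combo_depth P L) L p ltac:(lia)
        ltac:(unfold combo_depth; lia) ltac:(unfold combo_depth; lia) om delta delta_pos om_ge)
        as [X B].
      destruct (sqnorm_vscal_le om om_pos (c p) _ X) as [X' B'].
      split; [exact X'|]. eapply Rle_trans; [exact B'|].
      apply Rmult_le_compat_l; [apply pow2_ge_0|exact B].
    - destruct (in_X_vzero om om_pos) as [X B]. split; [exact X|].
      pose proof (pow2_ge_0 (Cmod (c p))). nra. }
  destruct (sqnorm_vsum_le om om_pos P Z (fun p Hp => proj1 (HZ p Hp))) as [X B].
  split; [exact X|]. eapply Rle_trans; [exact B|].
  unfold Rdiv. fold r. rewrite Rmult_comm, <- rsum_scal. apply rsum_le. intros p Hp.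
  pose proof (proj2 (HZ p Hp)). pose proof (pow_lt 2 (S p) ltac:(lra)). nra.
Qed.

Lemma sqnorm_basis_combo_sub P c d r : 0 <= r ->
  (forall p, (p < P)%nat -> Cmod (c p - d p) ^ 2 <= r) ->
  in_X om (Csub_seq (basis_combo P c) (basis_combo P d)) /\
  sqnorm om (Csub_seq (basis_combo P c) (basis_combo P d)) <= INR P * r / delta.
Proof.
  intros Hr Hcd.
  assert (Hw : forall p, wterm om (Csub_seq (basis_combo P c) (basis_combo P d)) p <=
                         if (p <? P)%nat then r / delta else 0).
  { intros p. unfold wterm, Csub_seq, basis_combo.
    assert (Z : Cmod (0 - 0)%C ^ 2 / om p = 0)
      by (replace (0 - 0)%C with (RtoC 0) by ring; rewrite Cmod_0; unfold Rdiv; ring).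
    assert (0 <= r / delta) by (apply Rdiv_le_0_compat; lra).
    destruct (Nat.ltb_spec p P) as [HpP|], (Nat.leb_spec 3 p); cbn [andb]; try lra.
    pose proof (om_ge p ltac:(lia)). pose proof (Hcd p HpP).
    unfold Rdiv. apply Rmult_le_compat; try lra.
    - apply pow2_ge_0.
    - left; apply Rinv_0_lt_compat; lra.
    - apply Rinv_le_contravar; lra. }
  apply in_X_of_partial_le; [exact om_pos| |].
  - intros p Hp. unfold Csub_seq, basis_combo. destruct (Nat.leb_spec 3 p); [lia|].
    rewrite Bool.andb_false_r. ring.
  - intros m. eapply Rle_trans; [apply rsum_le; intros; apply Hw|].
    eapply Rle_trans; [apply (rsum_mono m (m + P)); [lia|intros; destruct (_ <? _)%nat;
      [apply Rdiv_le_0_compat|]; lra]|].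
    rewrite (rsum_cut (m + P) P);
      [|lia|intros i Hi; destruct (Nat.ltb_spec i P); [lia|reflexivity]].
    rewrite (rsum_ext P _ (fun _ => r / delta))
      by (intros i Hi; destruct (Nat.ltb_spec i P); [reflexivity|lia]).
    rewrite rsum_const. unfold Rdiv. lra.
Qed.

Lemma sqnorm_sub_basis_combo_small g : in_X om g -> forall eps, 0 < eps ->
  exists P, in_X om (Csub_seq g (basis_combo P g)) /\
    sqnorm om (Csub_seq g (basis_combo P g)) <= eps.
Proof.
  intros Hg eps Heps. pose proof Hg as [Zg Eg].
  assert (Hs : is_lim_seq (sum_n (wterm om g)) (sqnorm om g)) by exact (Series_correct _ Eg).
  destruct (proj2 (is_lim_seq_spec _ _) Hs (mkposreal eps Heps)) as [N0 HN0].
  specialize (HN0 N0 (Nat.le_refl _)). simpl in HN0. rewrite sum_n_rsum in HN0.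
  apply Rabs_def2 in HN0.
  exists (S N0). apply in_X_of_partial_le; [exact om_pos| |].
  - apply zero_below3_sub; [exact Zg|]. intros p Hp. unfold basis_combo.
    destruct (Nat.leb_spec 3 p); [lia|]. now rewrite Bool.andb_false_r.
  - intros m.
    assert (Hw : forall p, wterm om (Csub_seq g (basis_combo (S N0) g)) p =
                           if (p <? S N0)%nat then 0 else wterm om g p).
    { intros p. unfold wterm, Csub_seq, basis_combo.
      destruct (Nat.ltb_spec p (S N0)), (Nat.leb_spec 3 p); simpl;
        try (replace (g p - g p)%C with (RtoC 0) by ring);
        try (rewrite Zg by lia; replace (0 - 0)%C with (RtoC 0) by ring);
        try (replace (g p - 0)%C with (g p) by ring);
        rewrite ?Cmod_0; unfold Rdiv; try ring. }
    rewrite (rsum_ext m _ _ (fun p _ => Hw p)).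
    set (w' := fun p => if (p <? S N0)%nat then 0 else wterm om g p).
    assert (Hw' : forall p, 0 <= w' p)
      by (intros p; unfold w'; destruct (p <? S N0)%nat; [lra|now apply wterm_nonneg]).
    apply Rle_trans with (rsum (S N0 + m) w'); [apply rsum_mono; auto; lia|].
    rewrite rsum_split, (rsum_zero (S N0))
      by (intros i Hi; unfold w'; destruct (Nat.ltb_spec i (S N0)); [reflexivity|lia]).
    rewrite (rsum_ext m _ (fun i => wterm om g (S N0 + i)%nat))
      by (intros i _; unfold w'; destruct (Nat.ltb_spec (S N0 + i) (S N0)); [lia|reflexivity]).
    pose proof (rsum_le_sqnorm om om_pos g Hg (S N0 + m)). rewrite rsum_split in H.
    unfold sqnorm in *. lra.
Qed.

Lemma kernel_combos_dense g : in_X om g -> forall eps, 0 < eps ->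
  exists P K L x, in_X om (Csub_seq g (kernel_combo P L (grid_coef K x))) /\
    sqnorm om (Csub_seq g (kernel_combo P L (grid_coef K x))) < eps.
Proof.
  intros Hg eps Heps.
  destruct (sqnorm_sub_basis_combo_small g Hg (eps / 16)) as [P [X1 B1]]; [lra|].
  destruct (small_inverse (2 * INR P / delta) (eps / 16)) as [K HK]; [lra|].
  set (k := INR (S K)).
  assert (Hk : 1 <= k) by (unfold k; rewrite S_INR; pose proof (pos_INR K); lra).
  destruct (grid_approx g K P) as [x Hx]. set (q := grid_coef K x).
  destruct (sqnorm_basis_combo_sub P g q (2 * (/ k) ^ 2)) as [X2 B2];
    [apply Rmult_le_pos; [lra|apply pow2_ge_0]|exact Hx|].
  assert (B2' : sqnorm om (Csub_seq (basis_combo P g) (basis_combo P q)) <= eps / 16).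
  { eapply Rle_trans; [exact B2|]. eapply Rle_trans; [|exact HK]. fold k.
    assert (0 < / k <= 1)
      by (split; [apply Rinv_0_lt_compat; lra|rewrite <- Rinv_1; apply Rinv_le_contravar; lra]).
    replace (2 * INR P / delta / k) with (INR P * (2 * / k) / delta) by (field; lra).
    unfold Rdiv. apply Rmult_le_compat_r; [left; apply Rinv_0_lt_compat; lra|].
    apply Rmult_le_compat_l; [apply pos_INR|]. simpl. nra. }
  set (Cq := rsum P (fun p => 2 ^ S p * Cmod (q p) ^ 2)).
  destruct (small_inverse (Cq / delta) (eps / 16)) as [L HL]; [lra|].
  destruct (sqnorm_basis_combo_sub_kernel_combo P L q) as [X3 B3]. fold Cq in B3.
  assert (B3' : sqnorm om (Csub_seq (basis_combo P q) (kernel_combo P L q)) <= eps / 16).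
  { eapply Rle_trans; [exact B3|]. eapply Rle_trans; [|exact HL]. right. field.
    split; [lra|apply not_0_INR; lia]. }
  exists P, K, L, x. change (grid_coef K x) with q.
  replace (Csub_seq g (kernel_combo P L q)) with
    (vadd (Csub_seq g (basis_combo P g))
          (vadd (Csub_seq (basis_combo P g) (basis_combo P q))
                (Csub_seq (basis_combo P q) (kernel_combo P L q))))
    by (apply functional_extensionality; intros p; unfold vadd, Csub_seq; ring).
  destruct (sqnorm_add_le om om_pos _ _ X2 X3) as [X23 B23].
  destruct (sqnorm_add_le om om_pos _ _ X1 X23) as [X123 B123].
  split; [exact X123|]. lra.
Qed.

End Density.

Definition decode (i : nat) : nat * nat * nat * nat :=
  let '(P, KLx) := Cantor.of_nat (fst (Cantor.of_nat i)) in
  let '(K, Lx) := Cantor.of_nat KLx in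
  let '(L, x) := Cantor.of_nat Lx in (P, K, L, x).

Definition approximant (i : nat) : nat -> C :=
  let '(P, K, L, x) := decode i in kernel_combo P L (grid_coef K x).

Definition approximant_depth (i : nat) : nat :=
  let '(P, K, L, x) := decode i in combo_depth P L.

Lemma Topn_approximant i : Topn (approximant_depth i) (approximant i) = vzero.
Proof.
  unfold approximant, approximant_depth. destruct (decode i) as [[[P K] L] x].
  apply Topn_kernel_combo.
Qed.

Lemma zero_below3_approximant i : zero_below3 (approximant i).
Proof.
  unfold approximant. destruct (decode i) as [[[P K] L] x]. apply zero_below3_kernel_combo.
Qed.

Lemma finitely_supported_approximant i : finitely_supported (approximant i).
Proof.
  unfold approximant. destruct (decode i) as [[[P K] L] x]. apply finitely_supported_kernel_combo.
Qed.

(* The second Cantor coordinate of [i] is ignored by [decode], so every approximant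
   occurs at arbitrarily large indices. *)
Lemma approximants_dense om delta : 0 < delta -> (forall n, (1 <= n)%nat -> delta <= om n) ->
  forall g, in_X om g -> forall eps, 0 < eps -> forall i0, exists i, (i0 <= i)%nat /\
  in_X om (Csub_seq g (approximant i)) /\ sqnorm om (Csub_seq g (approximant i)) < eps.
Proof.
  intros delta_pos om_ge g Hg eps Heps i0.
  destruct (kernel_combos_dense om delta delta_pos om_ge g Hg eps Heps) as [P [K [L [x Hx]]]].
  set (c := Cantor.to_nat (P, Cantor.to_nat (K, Cantor.to_nat (L, x)))).
  exists (Cantor.to_nat (c, i0)). split; [pose proof (Cantor.to_nat_non_decreasing c i0); lia|].
  assert (E : decode (Cantor.to_nat (c, i0)) = (P, K, L, x))
    by (unfold decode, c; repeat (rewrite Cantor.cancel_of_to; cbn [fst snd]); reflexivity).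
  unfold approximant. now rewrite E.
Qed.

Lemma normX_lt om x eps : (forall n, (1 <= n)%nat -> 0 < om n) -> in_X om x -> 0 < eps ->
  sqnorm om x < eps ^ 2 -> normX om x < eps.
Proof.
  intros om_pos Hx Heps H. rewrite normX_sqnorm, <- (sqrt_pow2 eps) by lra.
  apply sqrt_lt_1_alt. split; [now apply sqnorm_nonneg|exact H].
Qed.

Section Construction.

Variable om : nat -> R.
Hypothesis om_pos : forall n, (1 <= n)%nat -> 0 < om n.
Variable K2 : R.
Hypothesis K2_ge1 : 1 <= K2.
Hypothesis Topn_le : forall n c, in_X om c ->
  in_X om (Topn n c) /\ sqnorm om (Topn n c) <= K2 ^ n * sqnorm om c.

Variables (y : nat -> nat -> C) (depth : nat -> nat).
Hypothesis zero_below3_y : forall i, zero_below3 (y i).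
Hypothesis Topn_y : forall i, Topn (depth i) (y i) = vzero.
Hypothesis y_dense : forall g, in_X om g -> forall eps, 0 < eps ->
  forall i0, exists i, (i0 <= i)%nat /\
  in_X om (Csub_seq g (y i)) /\ sqnorm om (Csub_seq g (y i)) < eps.

Variable gap : nat -> nat -> nat.
Hypothesis gap_spec : forall i c m, (gap i c <= m)%nat ->
  in_X om (dbln m (y i)) /\ 2 ^ S i * sqnorm om (dbln m (y i)) <= (/ 16) ^ i / K2 ^ c.

Fixpoint time (i : nat) : nat :=
  match i with
  | O => gap 0 0
  | S i => (time i + depth i + gap (S i) (time i) + 1)%nat
  end.

Definition prev_time (i : nat) : nat := match i with O => 0%nat | S i => time i end.

Lemma time_ge_gap i : (gap i (prev_time i) <= time i)%nat.
Proof. destruct i; simpl; lia. Qed.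

Lemma time_step i : (time i + depth i + 1 <= time (S i))%nat.
Proof. simpl; lia. Qed.

Lemma time_mono i k : (i <= k)%nat -> (time i <= time k)%nat.
Proof. intros H; induction H; [lia|]. pose proof (time_step m). lia. Qed.

Lemma time_ge i : (i <= time i)%nat.
Proof. induction i; [lia|]. pose proof (time_step i). lia. Qed.

Lemma time_gap i k : (i < k)%nat -> (time i + depth i <= time k)%nat.
Proof. intros H. pose proof (time_step i). pose proof (time_mono (S i) k H). lia. Qed.

Lemma prev_time_ge k i : (k < i)%nat -> (time k <= prev_time i)%nat.
Proof. intros H. destruct i; [lia|]. apply time_mono. lia. Qed.

Definition piece (i : nat) : nat -> C := dbln (time i) (y i).

(* A pointwise finite sum, by [piece_vanish]. *)
Definition seed : nat -> C := fun p => csum (S p) (fun i => piece i p).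

Definition tail_piece (k i : nat) : nat -> C := if (k <? i)%nat then piece i else vzero.

Definition tail (k : nat) : nat -> C := fun p => csum (S p) (fun i => tail_piece k i p).

Lemma piece_vanish i p : (p < i)%nat -> piece i p = 0%C.
Proof.
  intros Hp. apply dbln_below; [apply zero_below3_y|].
  pose proof (time_ge i). pose proof (Nat.pow_gt_lin_r 2 (time i) ltac:(lia)). lia.
Qed.

Lemma piece_bound i :
  in_X om (piece i) /\ 2 ^ S i * sqnorm om (piece i) <= (/ 16) ^ i / K2 ^ prev_time i.
Proof. apply gap_spec, time_ge_gap. Qed.

Lemma in_X_seed : in_X om seed.
Proof.
  apply (sqnorm_series_le om om_pos piece (fun i => (/ 2) ^ i) 2).
  - exact piece_vanish.
  - intros i; apply piece_bound.
  - intros i. eapply Rle_trans; [apply piece_bound|].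
    pose proof (pow_le K2 (prev_time i) ltac:(lra)).
    pose proof (pow_R1_Rle K2 (prev_time i) K2_ge1).
    apply Rle_div_l; [lra|]. assert ((/ 16) ^ i <= (/ 2) ^ i) by (apply pow_incr; lra).
    pose proof (pow_le (/ 2) i ltac:(lra)). nra.
  - intros n. apply rsum_geom_half.
Qed.

Lemma tail_bound k :
  in_X om (tail k) /\ sqnorm om (tail k) <= 2 * ((/ 8) ^ k / K2 ^ time k).
Proof.
  set (C0 := (/ 8) ^ k / K2 ^ time k).
  assert (HC0 : 0 < C0) by (apply Rdiv_lt_0_compat; apply pow_lt; lra).
  apply (sqnorm_series_le om om_pos (tail_piece k)
           (fun i => if (k <? i)%nat then (/ 2) ^ i * C0 else 0)).
  - intros i p Hp. unfold tail_piece. destruct (k <? i)%nat; [now apply piece_vanish|reflexivity].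
  - intros i. unfold tail_piece.
    destruct (k <? i)%nat; [apply piece_bound|apply in_X_vzero, om_pos].
  - intros i. unfold tail_piece. destruct (Nat.ltb_spec k i) as [Hki|Hki].
    + eapply Rle_trans; [apply piece_bound|]. unfold C0.
      replace ((/ 16) ^ i) with ((/ 2) ^ i * (/ 8) ^ i)
        by (rewrite <- Rpow_mult_distr; f_equal; lra).
      assert ((/ 8) ^ i <= (/ 8) ^ k) by (apply pow_le_antimono; [lra|lia]).
      assert (K2 ^ time k <= K2 ^ prev_time i) by (apply Rle_pow; [lra|now apply prev_time_ge]).
      assert (0 < K2 ^ time k) by (apply pow_lt; lra).
      assert (/ K2 ^ prev_time i <= / K2 ^ time k) by (apply Rinv_le_contravar; lra).
      pose proof (pow_lt (/ 2) i ltac:(lra)). pose proof (pow_lt (/ 8) i ltac:(lra)).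
      assert (0 < / K2 ^ prev_time i) by (apply Rinv_0_lt_compat; lra).
      unfold Rdiv. rewrite !Rmult_assoc. apply Rmult_le_compat_l; [lra|].
      apply Rmult_le_compat; lra.
    + destruct (in_X_vzero om om_pos) as [_ Hz]. pose proof (pow_lt 2 (S i) ltac:(lra)). nra.
  - intros n. apply Rle_trans with (C0 * rsum n (fun i => (/ 2) ^ i)).
    + rewrite <- rsum_scal. apply rsum_le. intros i _.
      pose proof (pow_lt (/ 2) i ltac:(lra)). destruct (k <? i)%nat; nra.
    + pose proof (rsum_geom_half n). nra.
Qed.

Lemma seed_split k : seed = vadd (vsum (S k) piece) (tail k).
Proof.
  apply functional_extensionality; intros p. unfold seed, vadd, vsum, tail.
  set (head := fun i => (if (k <? i)%nat then 0%C else piece i p) : C).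
  rewrite (csum_ext (S p) _ (fun i => head i + tail_piece k i p)%C)
    by (intros i _; unfold head, tail_piece, vzero; destruct (k <? i)%nat; ring).
  rewrite csum_plus. f_equal.
  rewrite <- (csum_cut (S p + S k) (S p) head), (csum_cut (S p + S k) (S k) head); try lia.
  - apply csum_ext. intros i Hi. unfold head. destruct (Nat.ltb_spec k i); [lia|reflexivity].
  - intros i Hi. unfold head. destruct (Nat.ltb_spec k i); [reflexivity|lia].
  - intros i Hi. unfold head. destruct (k <? i)%nat; [reflexivity|apply piece_vanish; lia].
Qed.

Lemma Topn_head k : Topn (time k) (vsum (S k) piece) = y k.
Proof.
  change (vsum (S k) piece) with (vadd (vsum k piece) (piece k)).
  rewrite Topn_vadd, Topn_vsum. unfold piece at 2. rewrite Topn_dbln by apply zero_below3_y.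
  replace (vsum k (fun i => Topn (time k) (piece i))) with vzero.
  - apply functional_extensionality; intros p; unfold vadd, vzero; ring.
  - apply functional_extensionality; intros p. symmetry. apply csum_zero. intros i Hi.
    pose proof (time_gap i k Hi). unfold piece.
    rewrite Topn_dbln_ge by (auto; apply time_mono; lia).
    replace (time k - time i)%nat with (time k - time i - depth i + depth i)%nat by lia.
    now rewrite Topn_add, Topn_y, Topn_vzero.
Qed.

Lemma hypercyclic_of_kernel_family : hypercyclic_on_X om.
Proof.
  exists seed. split; [exact in_X_seed|]. intros g Hg eps Heps.
  destruct (pow_lt_1_zero (/ 8) ltac:(rewrite Rabs_right; lra) (eps ^ 2 / 16) ltac:(nra))
    as [k0 Hk0].
  destruct (y_dense g Hg (eps ^ 2 / 4) ltac:(nra) k0) as [k [Hk [Xk Bk]]].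
  specialize (Hk0 k Hk). rewrite Rabs_right in Hk0 by (apply Rle_ge, pow_le; lra).
  exists (time k).
  change (Nat.iter (time k) Top seed) with (Topn (time k) seed).
  rewrite (seed_split k), Topn_vadd, Topn_head.
  replace (Csub_seq g (vadd (y k) (Topn (time k) (tail k))))
    with (Csub_seq (Csub_seq g (y k)) (Topn (time k) (tail k)))
    by (apply functional_extensionality; intros p; unfold Csub_seq, vadd; ring).
  destruct (tail_bound k) as [XT BT]. destruct (Topn_le (time k) _ XT) as [XTT BTT].
  destruct (sqnorm_sub_le om om_pos _ _ Xk XTT) as [X B].
  apply normX_lt; auto.
  assert (0 < K2 ^ time k) by (apply pow_lt; lra).
  assert (K2 ^ time k * sqnorm om (tail k) <= 2 * (/ 8) ^ k).
  { eapply Rle_trans; [apply Rmult_le_compat_l; [lra|exact BT]|]. right. field. lra. }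
  pose proof (pow_lt eps 2 Heps). lra.
Qed.

End Construction.

Lemma gap_exists om K2 (y : nat -> nat -> C) :
  (forall n, (1 <= n)%nat -> 0 < om n) ->
  (forall k, (3 <= k)%nat -> is_lim_seq (fun n => om (k * 2 ^ n)%nat) p_infty) ->
  0 < K2 -> (forall i, zero_below3 (y i)) -> (forall i, finitely_supported (y i)) ->
  exists gap : nat -> nat -> nat, forall i c m, (gap i c <= m)%nat ->
    in_X om (dbln m (y i)) /\ 2 ^ S i * sqnorm om (dbln m (y i)) <= (/ 16) ^ i / K2 ^ c.
Proof.
  intros om_pos om_lim HK2 Zy Fy.
  assert (H : forall ic : nat * nat, exists M, forall m, (M <= m)%nat ->
    in_X om (dbln m (y (fst ic))) /\
    2 ^ S (fst ic) * sqnorm om (dbln m (y (fst ic))) <= (/ 16) ^ fst ic / K2 ^ snd ic).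
  { intros [i c]. simpl fst; simpl snd.
    pose proof (pow_lt 2 (S i) ltac:(lra)).
    assert (Heps : 0 < (/ 16) ^ i / K2 ^ c / 2 ^ S i)
      by (repeat apply Rdiv_lt_0_compat; try apply pow_lt; lra).
    destruct (sqnorm_dbln_small om om_pos om_lim (y i) (Zy i) (Fy i) _ Heps) as [M HM].
    exists M. intros m Hm. destruct (HM m Hm) as [X B]. split; [exact X|].
    apply Rmult_le_compat_l with (r := 2 ^ S i) in B; [|lra].
    eapply Rle_trans; [exact B|]. right. field. split; apply pow_nonzero; lra. }
  destruct (choice _ H) as [M HM]. exists (fun i c => M (i, c)).
  intros i c m Hm. exact (HM (i, c) m Hm).
Qed.

Theorem hypercyclic_of_weight_conditions om :
  (forall n, (1 <= n)%nat -> 0 < om n) ->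
  (exists delta : R, 0 < delta /\ forall n, (1 <= n)%nat -> delta <= om n) ->
  (forall k, (3 <= k)%nat -> is_lim_seq (fun n => om (k * 2 ^ n)%nat) p_infty) ->
  bounded_on_X om -> hypercyclic_on_X om.
Proof.
  intros om_pos [delta [delta_pos om_ge]] om_lim Hbd.
  destruct (Topn_bounded om om_pos Hbd) as [K2 [HK2 HT]].
  destruct (gap_exists om K2 approximant om_pos om_lim ltac:(lra)
              zero_below3_approximant finitely_supported_approximant) as [gap Hgap].
  exact (hypercyclic_of_kernel_family om om_pos K2 HK2 HT approximant approximant_depth
           zero_below3_approximant Topn_approximant
           (approximants_dense om delta delta_pos om_ge) gap Hgap).
Qed.

Lemma Top_formula c m : (3 <= m)%nat ->
  Top c m = (c (2 * m)%nat + (if (m mod 3 =? 2)%nat then c ((2 * m - 1) / 3)%nat else 0%C))%C.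
Proof.
  intros Hm. rewrite Top_eq. destruct (Nat.ltb_spec m 3); [lia|].
  set (o := ((2 * m - 1) / 3 - 3)%nat).
  rewrite (csum_ext _ _ (fun i => (if Nat.eqb i (2 * m - 3) then c (2 * m)%nat else 0%C) +
      (if (m mod 3 =? 2)%nat then (if Nat.eqb i o then c ((2 * m - 1) / 3)%nat else 0%C)
       else 0%C))%C).
  - rewrite csum_plus, csum_single. destruct (Nat.ltb_spec (2 * m - 3) (2 * m - 2)); [|lia].
    f_equal. destruct (Nat.eqb_spec (m mod 3) 2).
    + rewrite csum_single. destruct (Nat.ltb_spec o (2 * m - 2)); [reflexivity|unfold o in *; lia].
    + now apply csum_zero.
  - intros i Hi. unfold o. destruct (even_or_odd (3 + i)) as [[h Hh]|[h Hh]]; rewrite Hh.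
    + rewrite collatz_even.
      destruct (Nat.eqb_spec h m), (Nat.eqb_spec i (2 * m - 3)), (Nat.eqb_spec (m mod 3) 2);
        try lia; try (destruct (Nat.eqb_spec i ((2 * m - 1) / 3 - 3)); [lia|]); subst;
        try (replace (2 * m)%nat with (3 + i)%nat by lia; rewrite Hh); ring.
    + rewrite collatz_odd.
      destruct (Nat.eqb_spec (3 * h + 2) m), (Nat.eqb_spec i (2 * m - 3)),
        (Nat.eqb_spec (m mod 3) 2);
        try lia; try (destruct (Nat.eqb_spec i ((2 * m - 1) / 3 - 3)); try lia);
        try (replace ((2 * m - 1) / 3)%nat with (2 * h + 1)%nat by lia); ring.
Qed.

Lemma omega0_pos n : 0 < omega0 n.
Proof. unfold omega0. apply Rdiv_lt_0_compat; [pose proof (pos_INR n); lra|apply PI_RGT_0]. Qed.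

Lemma omega0_ge n : / PI <= omega0 n.
Proof.
  unfold omega0, Rdiv. rewrite <- (Rmult_1_l (/ PI)) at 1.
  apply Rmult_le_compat_r; [left; apply Rinv_0_lt_compat, PI_RGT_0|]. pose proof (pos_INR n); lra.
Qed.

Lemma omega0_lim k : (3 <= k)%nat -> is_lim_seq (fun n => omega0 (k * 2 ^ n)%nat) p_infty.
Proof.
  intros Hk. apply is_lim_seq_spec. intros M.
  destruct (nat_unbounded (M * PI)) as [N HN]. exists N. intros n Hn.
  assert (INR N <= INR (k * 2 ^ n)%nat).
  { apply le_INR. pose proof (Nat.pow_gt_lin_r 2 n ltac:(lia)). nia. }
  pose proof PI_RGT_0. unfold omega0.
  apply (Rmult_lt_reg_r PI); auto. unfold Rdiv. rewrite Rmult_assoc, Rinv_l by lra. lra.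
Qed.

Lemma wterm_omega0_nonneg c p : 0 <= wterm omega0 c p.
Proof. apply Rdiv_le_0_compat; [apply pow2_ge_0|apply omega0_pos]. Qed.

Lemma wterm_omega0_Top_le c m : wterm omega0 (Top c) m <=
  4 * wterm omega0 c (2 * m) +
  2 * (if (m mod 3 =? 2)%nat then wterm omega0 c ((2 * m - 1) / 3) else 0).
Proof.
  pose proof (wterm_omega0_nonneg c (2 * m)).
  assert (0 <= if (m mod 3 =? 2)%nat then wterm omega0 c ((2 * m - 1) / 3) else 0)
    by (destruct (m mod 3 =? 2)%nat; [apply wterm_omega0_nonneg|lra]).
  destruct (Nat.lt_ge_cases m 3).
  - rewrite wterm_below3 by (auto; apply zero_below3_Top). lra.
  - unfold wterm at 1. rewrite Top_formula by exact H1.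
    pose proof (omega0_pos m). pose proof PI_RGT_0. pose proof (pos_INR m).
    eapply Rle_trans;
      [apply Rmult_le_compat_r; [left; now apply Rinv_0_lt_compat|apply Cmod_sqr_add_le]|].
    assert (W1 : / omega0 m <= 2 * / omega0 (2 * m)%nat).
    { unfold omega0. rewrite !Rinv_div, mult_INR. change (INR 2) with 2.
      apply Rle_trans with (2 * (PI / (2 * INR m + 2))); [right; field; lra|].
      apply Rmult_le_compat_l; [lra|]. unfold Rdiv. apply Rmult_le_compat_l; [lra|].
      apply Rinv_le_contravar; lra. }
    assert (A1 : Cmod (c (2 * m)%nat) ^ 2 * / omega0 m <= 2 * wterm omega0 c (2 * m)).
    { unfold wterm, Rdiv. pose proof (pow2_ge_0 (Cmod (c (2 * m)%nat))). nra. }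
    destruct (Nat.eqb_spec (m mod 3) 2).
    + assert (W2 : / omega0 m <= / omega0 ((2 * m - 1) / 3)%nat).
      { apply Rinv_le_contravar; [apply omega0_pos|]. unfold omega0, Rdiv.
        apply Rmult_le_compat_r; [left; apply Rinv_0_lt_compat, PI_RGT_0|].
        apply Rplus_le_compat_r, le_INR. lia. }
      assert (A2 : Cmod (c ((2 * m - 1) / 3)%nat) ^ 2 * / omega0 m <=
                   wterm omega0 c ((2 * m - 1) / 3)).
      { unfold wterm, Rdiv. pose proof (pow2_ge_0 (Cmod (c ((2 * m - 1) / 3)%nat))). nra. }
      nra.
    + rewrite Cmod_0. nra.
Qed.

Lemma rsum_even_le a Q : (forall p, 0 <= a p) -> rsum Q (fun m => a (2 * m)%nat) <= rsum (2 * Q) a.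
Proof.
  intros Ha. rewrite rsum_even_odd.
  pose proof (rsum_nonneg Q (fun i => a (2 * i + 1)%nat) (fun i _ => Ha _)).
  lra.
Qed.

Lemma rsum_mod3_le a Q : (forall p, 0 <= a p) ->
  rsum Q (fun m => if (m mod 3 =? 2)%nat then a ((2 * m - 1) / 3)%nat else 0) <= rsum (2 * Q) a.
Proof.
  intros Ha. eapply Rle_trans.
  - apply (rsum_mono Q (3 * Q)); [lia|]. intros p. destruct (p mod 3 =? 2)%nat; [apply Ha|lra].
  - rewrite rsum_mod3, (rsum_ext Q _ (fun i => a (2 * i + 1)%nat)).
    + rewrite rsum_even_odd.
      pose proof (rsum_nonneg Q (fun i => a (2 * i)%nat) (fun i _ => Ha _)). lra.
    + intros i _.
      destruct (Nat.eqb_spec ((3 * i) mod 3) 2), (Nat.eqb_spec ((3 * i + 1) mod 3) 2),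
        (Nat.eqb_spec ((3 * i + 2) mod 3) 2); try lia.
      replace ((2 * (3 * i + 2) - 1) / 3)%nat with (2 * i + 1)%nat by lia. lra.
Qed.

Lemma omega0_bounded : bounded_on_X omega0.
Proof.
  exists (sqrt 6). intros c Hc.
  assert (Hpos : forall n, (1 <= n)%nat -> 0 < omega0 n) by (intros; apply omega0_pos).
  assert (B : in_X omega0 (Top c) /\ sqnorm omega0 (Top c) <= 6 * sqnorm omega0 c).
  { apply in_X_of_partial_le; [exact Hpos|apply zero_below3_Top|]. intros Q.
    eapply Rle_trans; [apply rsum_le; intros; apply wterm_omega0_Top_le|].
    rewrite rsum_plus, !rsum_scal.
    pose proof (rsum_le_sqnorm omega0 Hpos c Hc (2 * Q)).
    pose proof (rsum_even_le (wterm omega0 c) Q (wterm_omega0_nonneg c)).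
    pose proof (rsum_mod3_le (wterm omega0 c) Q (wterm_omega0_nonneg c)). lra. }
  destruct B as [XT BT]. split; [exact XT|].
  rewrite !normX_sqnorm, <- sqrt_mult_alt by lra. now apply sqrt_le_1_alt.
Qed.

Theorem theorem3p4 :
  (forall omega : nat -> R,
     (forall n, (1 <= n)%nat -> 0 < omega n) ->
     (exists delta : R, 0 < delta /\ forall n, (1 <= n)%nat -> delta <= omega n) ->
     (forall k, (3 <= k)%nat -> is_lim_seq (fun n => omega (k * 2 ^ n)%nat) p_infty) ->
     bounded_on_X omega ->
     hypercyclic_on_X omega)
  /\ hypercyclic_on_X omega0.
Proof.
  split; [exact hypercyclic_of_weight_conditions|].
  apply hypercyclic_of_weight_conditions.
  - intros n _. apply omega0_pos.
  - exists (/ PI). split; [apply Rinv_0_lt_compat, PI_RGT_0|intros n _; apply omega0_ge].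
  - exact omega0_lim.
  - exact omega0_bounded.
Qed.
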